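(* Let $l\ge1$ and $n\ge4l+2$ with $(2l+1)\mid n$. Then every midpoint crossing of $P_n$ is a global minimum of $s_{2l+1}$, every vertex crossing is a global maximum of $s_{2l+1}$, in counterclockwise order around $P_n$ the crossings alternate between vertex crossings and midpoint crossings, and $s_{2l+1}$ is strictly monotonic between adjacent midpoint and vertex crossings.
   Context: $P_n$ is the boundary of the regular polygon in $\mathbb{R}^2$ with vertices the $n$-th roots of unity, Euclidean metric $\|x-y\|$. $d_{P_n}(x,y)\in[0,1)$ is the counterclockwise arc length of $P_n$ from $x$ to $y$ divided by the perimeter. The directed Vietoris–Rips graph $\mathrm{VR}_<(P_n;r)$ has vertex set $P_n$ and, for distinct $u,w$ with $\|u-w\|<r$, the edge $u\to w$ if $d_{P_n}(u,w)<d_{P_n}(w,u)$, else $w\to u$; it is cyclic if whenever $u_0\to u_1$, every $w$ strictly counterclockwise-between them has $u_0\to w$ and $w\to u_1$. $r_n=\sup\{r\ge0:\mathrm{VR}_<(P_n;r')\text{ cyclic for all }0<r'<r\}$. For $0<r<r_n$, $g_r(p)$ is the first point $w$ met moving counterclockwise from $p$ with $\|p-w\|=r$, and $g_{r_n}=\lim_{r\to r_n}g_r$. An equilateral $(2l+1)$-pointed star of side $r\in(0,r_n]$ inscribed in $P_n$ is a cyclic sequence $u_0,\dots,u_{2l}$ with $u_{i+1}=g_r(u_i)$ (indices mod $2l+1$) and $\sum_i d_{P_n}(u_i,u_{i+1})=l$. For $n\ge4l+2$ each $p\in P_n$ lies on exactly one such star, and $s_{2l+1}(p)$ denotes its side length.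 $p$ is a vertex crossing (resp. midpoint crossing) if that star contains a vertex of $P_n$ (resp. the midpoint of an edge of $P_n$). *)

From Stdlib Require Import Reals Lra ClassicalEpsilon.
From Coquelicot Require Import Coquelicot.
Open Scope R_scope.

(* Points of P_n are represented by their normalized counterclockwise
   arc-length parameter t in [0,1): t = (arc length from the vertex 1 to the
   point) / perimeter.  The map t |-> pt n t is a bijection [0,1) -> P_n. *)
Definition inP (t : R) : Prop := 0 <= t < 1.

Definition vert (n : nat) (k : Z) : R * R :=
  (cos (2 * PI * IZR k / INR n), sin (2 * PI * IZR k / INR n)).

Definition pt (n : nat) (t : R) : R * R :=
  let u := INR n * t in
  let k := Int_part u in
  let f := frac_part u in
  ((1 - f) * fst (vert n k) + f * fst (vert n (k + 1)),
   (1 - f) * snd (vert n k) + f * snd (vert n (k + 1))).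

Definition edist (a b : R * R) : R :=
  sqrt ((fst a - fst b) ^ 2 + (snd a - snd b) ^ 2).

(* d_{P_n}(x,y): counterclockwise arc length from x to y over the perimeter *)
Definition dP (s t : R) : R := frac_part (t - s).

(* directed edge u -> w of VR_<(P_n; r) *)
Definition arrow (n : nat) (r u w : R) : Prop :=
  u <> w /\ edist (pt n u) (pt n w) < r /\ dP u w <= dP w u.

Definition cyclicVR (n : nat) (r : R) : Prop :=
  forall u0 u1, inP u0 -> inP u1 -> arrow n r u0 u1 ->
  forall w, inP w -> 0 < dP u0 w < dP u0 u1 ->
    arrow n r u0 w /\ arrow n r w u1.

Definition rn (n : nat) : R :=
  real (Lub_Rbar (fun r => 0 <= r /\ forall r', 0 < r' < r -> cyclicVR n r')).

Definition off0 (n : nat) (r p : R) : R :=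
  real (Glb_Rbar (fun t => 0 < t < 1 /\ edist (pt n p) (pt n (p + t)) = r)).

(* offset of g_r(p) from p, with g_{r_n} = lim_{r -> r_n^-} g_r *)
Definition off (n : nat) (r p : R) : R :=
  if Rlt_dec r (rn n) then off0 n r p
  else epsilon (inhabits 0)
         (fun L => filterlim (fun r' => off0 n r' p) (at_left (rn n)) (locally L)).

Definition g (n : nat) (r p : R) : R := frac_part (p + off n r p).

Definition is_star (n l : nat) (r : R) (u : nat -> R) : Prop :=
  (forall i, (i < 2 * l + 1)%nat -> u (S i) = g n r (u i)) /\
  u (2 * l + 1)%nat = u 0%nat /\
  sum_f_R0 (fun i => dP (u i) (u (S i))) (2 * l) = INR l.

Definition star_side (n l : nat) (r p : R) : Prop :=
  0 < r <= rn n /\ exists u, u 0%nat = p /\ is_star n l r u.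

Definition s (n l : nat) (p : R) : R :=
  epsilon (inhabits 0) (fun r => star_side n l r p).

Definition vcross (n l : nat) (p : R) : Prop :=
  exists u, u 0%nat = p /\ is_star n l (s n l p) u /\
    exists i k, (i <= 2 * l)%nat /\ u i = IZR k / INR n.

Definition mcross (n l : nat) (p : R) : Prop :=
  exists u, u 0%nat = p /\ is_star n l (s n l p) u /\
    exists i k, (i <= 2 * l)%nat /\ u i = (IZR k + / 2) / INR n.

Definition crossing (n l : nat) (p : R) : Prop := vcross n l p \/ mcross n l p.

From Stdlib Require Import Reals Lra Lia ClassicalEpsilon.
From Coquelicot Require Import Coquelicot.
Open Scope R_scope.

(* Write n = (2l+1) m and L = l m / n = l / (2l+1).  Rotating by l m vertices is a symmetry
   of P_n, so p, p + L, ..., p + 2l L is an equilateral star winding l times around P_n, with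
   side c |p|, where c is the chord of the rotation angle.  It is the star through p: the
   distance from p along the boundary, t |-> |p - (p + t)|, increases on [0, L], and also as
   long as it stays below c (so VR_<(P_n; r) is cyclic for r < c <= r_n); hence g_r(p) = p + L
   exactly for r = c |p|.  Since x |-> x + g_r(x) preserves the cyclic order, a smaller
   (larger) side makes the 2l+1 steps fall short of (overshoot) l turns.  Therefore
   s_{2l+1}(p) = c sqrt (1 - 2 f (1 - f) (1 - cos (2 pi / n))), where f is the position of p on
   its edge: maximal at vertices (f = 0), minimal at midpoints (f = 1/2), and monotone on
   each half edge in between. *)

(** * Fractional parts *)

Lemma frac_part_of_decomp r k f : 0 <= f < 1 -> r = IZR k + f -> frac_part r = f.
Proof. intros Hf Hr. symmetry. apply (Int_part_frac_part_spec r k f Hf Hr). Qed.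

Lemma Int_part_of_decomp r k f : 0 <= f < 1 -> r = IZR k + f -> Int_part r = k.
Proof. intros Hf Hr. symmetry. apply (Int_part_frac_part_spec r k f Hf Hr). Qed.

Lemma frac_part_bounds r : 0 <= frac_part r < 1.
Proof. destruct (base_fp r). lra. Qed.

Lemma frac_part_int_offset r : exists k, r = IZR k + frac_part r.
Proof. exists (Int_part r). apply Rplus_Int_part_frac_part. Qed.

Lemma frac_part_add_IZR r k : frac_part (r + IZR k) = frac_part r.
Proof.
  apply (frac_part_of_decomp _ (Int_part r + k)); [apply frac_part_bounds|].
  rewrite plus_IZR, (Rplus_Int_part_frac_part r) at 1. ring.
Qed.

Lemma frac_part_id r : 0 <= r < 1 -> frac_part r = r.
Proof. intros H. apply (frac_part_of_decomp _ 0); [auto | simpl; ring]. Qed.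

Lemma frac_part_eq_iff c y : 0 <= c < 1 -> frac_part y = c <-> exists k, y = IZR k + c.
Proof.
  intros Hc. split.
  - intros <-. apply frac_part_int_offset.
  - intros [k Hk]. exact (frac_part_of_decomp y k c Hc Hk).
Qed.

Lemma frac_part_eq_shift y z : frac_part y = frac_part z -> exists k, z = y + IZR k.
Proof.
  intros H. exists (Int_part z - Int_part y)%Z. rewrite minus_IZR.
  rewrite (Rplus_Int_part_frac_part y), (Rplus_Int_part_frac_part z) at 1. lra.
Qed.

Definition edge_weight (y : R) : R := frac_part y * (1 - frac_part y).

Lemma edge_weight_bounds y : 0 <= edge_weight y <= 1 / 4.
Proof.
  unfold edge_weight. pose proof (frac_part_bounds y). pose proof (pow2_ge_0 (frac_part y - 1 / 2)).
  split; nra.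
Qed.

Lemma edge_weight_on_edge y k : IZR k <= y <= IZR k + 1 ->
  edge_weight y = (y - IZR k) * (1 - (y - IZR k)).
Proof.
  intros Hy. unfold edge_weight. destruct (Req_dec y (IZR k + 1)) as [->|Hne].
  - rewrite (frac_part_of_decomp _ (k + 1) 0) by (lra || (rewrite plus_IZR; simpl; ring)). ring.
  - rewrite (frac_part_of_decomp _ k (y - IZR k)) by lra. reflexivity.
Qed.

Lemma edge_weight_increasing y1 y2 k : IZR k <= y1 -> y1 < y2 -> y2 <= IZR k + 1 / 2 ->
  edge_weight y1 < edge_weight y2.
Proof. intros Hy1 Hy12 Hy2. rewrite !(edge_weight_on_edge _ k) by lra. nra. Qed.

Lemma edge_weight_decreasing y1 y2 k : IZR k + 1 / 2 <= y1 -> y1 < y2 -> y2 <= IZR k + 1 ->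
  edge_weight y2 < edge_weight y1.
Proof. intros Hy1 Hy12 Hy2. rewrite !(edge_weight_on_edge _ k) by lra. nra. Qed.

Lemma edge_weight_add_IZR y k : edge_weight (y + IZR k) = edge_weight y.
Proof. unfold edge_weight. rewrite frac_part_add_IZR. reflexivity. Qed.

Lemma dP_bounds a b : 0 <= dP a b < 1.
Proof. apply frac_part_bounds. Qed.

Lemma dP_lift a b : exists k, b = a + dP a b + IZR k.
Proof. unfold dP. destruct (frac_part_int_offset (b - a)) as [k Hk]. exists k. lra. Qed.

Lemma dP_of_lift a b t k : 0 <= t < 1 -> b = a + t + IZR k -> dP a b = t.
Proof. intros Ht Hb. apply (frac_part_of_decomp _ k); [auto | lra]. Qed.

Lemma dP_self a : dP a a = 0.
Proof. unfold dP. rewrite Rminus_diag. apply frac_part_id. lra. Qed.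

Lemma dP_frac a b : dP (frac_part a) (frac_part b) = frac_part (b - a).
Proof.
  destruct (frac_part_int_offset a) as [ka Ha], (frac_part_int_offset b) as [kb Hb].
  unfold dP. replace (frac_part b - frac_part a) with ((b - a) + IZR (ka - kb))
    by (rewrite minus_IZR; lra).
  apply frac_part_add_IZR.
Qed.

Lemma inP_frac_part a : inP (frac_part a).
Proof. apply frac_part_bounds. Qed.

Lemma dP_pos a b : inP a -> inP b -> a <> b -> 0 < dP a b.
Proof.
  intros Ha Hb Hab. destruct (dP_bounds a b) as [[Hpos|H0] _]; [exact Hpos|].
  destruct (dP_lift a b) as [k Hk]. rewrite <- H0 in Hk. unfold inP in *.
  assert (Hlo : IZR (-1) < IZR k) by (simpl; lra). assert (Hhi : IZR k < IZR 1) by (simpl; lra).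
  apply lt_IZR in Hlo. apply lt_IZR in Hhi. replace k with 0%Z in Hk by lia.
  simpl in Hk. lra.
Qed.

Lemma dP_swap a b : inP a -> inP b -> a <> b -> dP b a = 1 - dP a b.
Proof.
  intros Ha Hb Hab. pose proof (dP_pos a b Ha Hb Hab). pose proof (dP_bounds a b).
  destruct (dP_lift a b) as [k Hk].
  apply (dP_of_lift _ _ _ (- k - 1)); [lra|]. rewrite minus_IZR, opp_IZR. simpl. lra.
Qed.

(** * First hitting times, monotone limits and thresholds *)

Lemma ivt_strict (f : R -> R) a b y : continuity f -> a < b -> f a < y -> y < f b ->
  exists z, a < z < b /\ f z = y.
Proof.
  intros Hc Hab Ha Hb.
  assert (Hc' : continuity (fun t => f t - y)).
  { apply continuity_minus; [exact Hc | apply continuity_const; intros u v; reflexivity]. }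
  destruct (IVT (fun t => f t - y) a b Hc' Hab) as [z [[Hz1 Hz2] Hz]]; cbv beta in *; [lra | lra |].
  exists z. split; [|lra]. split.
  - destruct Hz1 as [H|H]; [exact H | subst; lra].
  - destruct Hz2 as [H|H]; [exact H | subst; lra].
Qed.

Lemma continuity_pt_lt_near (f : R -> R) x r : continuity_pt f x -> f x < r ->
  exists d, 0 < d /\ forall y, Rabs (y - x) < d -> f y < r.
Proof.
  intros Hc Hx. destruct (Hc (r - f x) ltac:(lra)) as [d [Hd Hy]].
  exists d. split; [exact Hd|]. intros y Hyx. destruct (Req_dec x y) as [<-|Hne]; [exact Hx|].
  specialize (Hy y (conj (conj I Hne) Hyx)). simpl in Hy. unfold R_dist in Hy.
  apply Rabs_def2 in Hy. lra.
Qed.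

Lemma continuity_pt_gt_near (f : R -> R) x r : continuity_pt f x -> r < f x ->
  exists d, 0 < d /\ forall y, Rabs (y - x) < d -> r < f y.
Proof.
  intros Hc Hx. destruct (continuity_pt_lt_near (fun y => - f y) x (- r)) as [d [Hd Hy]].
  - apply continuity_pt_opp. exact Hc.
  - lra.
  - exists d. split; [exact Hd|]. intros y Hyx. specialize (Hy y Hyx). lra.
Qed.

Lemma first_hit (f : R -> R) r t1 :
  continuity f -> f 0 = 0 -> 0 < r -> 0 < t1 < 1 -> f t1 = r ->
  let g := real (Glb_Rbar (fun t => 0 < t < 1 /\ f t = r)) in
  0 < g <= t1 /\ f g = r /\ (forall s, 0 <= s < g -> f s < r) /\
  (forall t, 0 < t < 1 -> f t = r -> g <= t).
Proof.
  intros Hc Hf0 Hr Ht1 Hft1 g. set (A := fun t => 0 < t < 1 /\ f t = r).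
  destruct (Glb_Rbar_correct A) as [Hlb Hglb].
  assert (Hle1 : Rbar_le (Glb_Rbar A) t1) by (apply Hlb; split; auto).
  assert (Hge0 : Rbar_le 0 (Glb_Rbar A)) by (apply Hglb; intros t [Ht _]; simpl; lra).
  assert (Hfin : Glb_Rbar A = Finite g) by (unfold g; fold A; destruct (Glb_Rbar A); simpl in *; tauto).
  rewrite Hfin in Hle1, Hge0, Hglb. simpl in Hle1, Hge0.
  assert (Hmin : forall t, 0 < t < 1 -> f t = r -> g <= t).
  { intros t Ht Hft. pose proof (Hlb t (conj Ht Hft)) as H. rewrite Hfin in H. exact H. }
  assert (Hbefore : forall s, 0 <= s < g -> f s < r).
  { intros s Hs. destruct (Rlt_le_dec (f s) r) as [|Hge]; [auto|exfalso].
    assert (Hs0 : 0 < s) by (destruct (Req_dec s 0) as [->|]; lra).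
    destruct Hge as [Hgt|Heq].
    - destruct (ivt_strict f 0 s r Hc Hs0 ltac:(lra) Hgt) as [z [Hz Hfz]].
      pose proof (Hmin z ltac:(lra) Hfz). lra.
    - pose proof (Hmin s ltac:(lra) (eq_sym Heq)). lra. }
  assert (Hfg : f g = r).
  { destruct (Rtotal_order (f g) r) as [Hlt|[|Hgt]]; [exfalso | auto | exfalso].
    - destruct (continuity_pt_lt_near f g r (Hc g) Hlt) as [d [Hd Hnear]].
      assert (Hgd : Rbar_le (g + d) g).
      { apply Hglb. intros t [Ht Hft]. simpl. destruct (Rle_dec (g + d) t) as [|Hlt']; [auto|].
        pose proof (Hmin t Ht Hft). assert (f t < r) by (apply Hnear; rewrite Rabs_right; lra). lra. }
      simpl in Hgd. lra.
    - assert (Hg0 : 0 < g) by (destruct (Req_dec g 0) as [E|]; [rewrite E, Hf0 in Hgt|]; lra).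
      destruct (continuity_pt_gt_near f g r (Hc g) Hgt) as [d [Hd Hnear]].
      set (s := g - Rmin d g / 2).
      pose proof (Rmin_l d g). pose proof (Rmin_r d g). pose proof (Rmin_pos d g Hd Hg0).
      assert (r < f s) by (apply Hnear; unfold s; rewrite Rabs_left; lra).
      pose proof (Hbefore s ltac:(unfold s; lra)). lra. }
  assert (0 < g) by (destruct (Req_dec g 0) as [E|]; [rewrite E, Hf0 in Hfg|]; lra).
  repeat split; auto; lra.
Qed.

Lemma increasing_at_left_sup (f : R -> R) a B : 0 < a ->
  (forall r1 r2, 0 < r1 -> r1 < r2 -> r2 < a -> f r1 < f r2) ->
  (forall r, 0 < r < a -> f r <= B) ->
  let L := real (Lub_Rbar (fun v => exists r, 0 < r < a /\ v = f r)) in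
  filterlim f (at_left a) (locally L) /\ (forall r, 0 < r < a -> f r <= L) /\
  (forall eps, 0 < eps -> exists r, 0 < r < a /\ L - eps < f r).
Proof.
  intros Ha Hinc HB L. set (V := fun v => exists r, 0 < r < a /\ v = f r) in L.
  destruct (Lub_Rbar_correct V) as [Hub Hlub].
  assert (Hb : Rbar_le (Lub_Rbar V) B) by (apply Hlub; intros v [r [Hr ->]]; apply HB, Hr).
  assert (Ha2 : Rbar_le (f (a / 2)) (Lub_Rbar V)) by (apply Hub; exists (a / 2); split; [lra | auto]).
  assert (HF : Lub_Rbar V = Finite L) by (unfold L; destruct (Lub_Rbar V); simpl in *; tauto).
  rewrite HF in Hub, Hlub.
  assert (Hle : forall r, 0 < r < a -> f r <= L) by (intros r Hr; apply (Hub (f r)); exists r; auto).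
  assert (Happrox : forall eps, 0 < eps -> exists r, 0 < r < a /\ L - eps < f r).
  { intros eps Heps. apply NNPP. intros Hno.
    assert (Rbar_le L (L - eps)); [|simpl in *; lra].
    apply Hlub. intros v [r [Hr ->]]. simpl. apply Rnot_lt_le. intros Hlt. apply Hno. exists r. auto. }
  split; [|split; assumption].
  apply filterlim_locally. intros eps.
  destruct (Happrox eps (cond_pos eps)) as [r [Hr Hlt]].
  exists (mkposreal (a - r) ltac:(lra)). intros y Hy Hya. simpl in Hy.
  unfold ball in Hy; simpl in Hy; unfold AbsRing_ball, abs, minus, plus, opp in Hy; simpl in Hy.
  apply Rabs_def2 in Hy.
  pose proof (Hinc r y ltac:(lra) ltac:(lra) Hya). pose proof (Hle y ltac:(lra)).
  unfold ball; simpl; unfold AbsRing_ball, abs, minus, plus, opp; simpl.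
  apply Rabs_def1; lra.
Qed.

Lemma threshold_bounds (P : R -> Prop) c b w : 0 < c -> 0 <= b < w ->
  (forall r, 0 < r < c -> P r) -> (forall r, b < r <= w -> ~ P r) ->
  let rho := real (Lub_Rbar (fun r => 0 <= r /\ forall r', 0 < r' < r -> P r')) in
  c <= rho <= b /\ (forall r, 0 < r < rho -> P r).
Proof.
  intros Hc Hb HP HnP rho. set (S := fun r => 0 <= r /\ forall r', 0 < r' < r -> P r').
  destruct (Lub_Rbar_correct S) as [Hub Hlub].
  assert (HSb : Rbar_le (Lub_Rbar S) b).
  { apply Hlub. intros r [Hr0 Hr]. simpl. apply Rnot_lt_le. intros Hbr.
    set (r' := (b + Rmin r w) / 2). pose proof (Rmin_l r w). pose proof (Rmin_r r w).
    assert (b < Rmin r w) by (apply Rmin_glb_lt; lra).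
    apply (HnP r'); [unfold r'; lra|]. apply Hr. unfold r'. lra. }
  assert (HSc : Rbar_le c (Lub_Rbar S)) by (apply Hub; split; [lra | exact HP]).
  assert (HF : Lub_Rbar S = Finite rho)
    by (unfold rho; fold S; destruct (Lub_Rbar S); simpl in *; tauto).
  rewrite HF in HSb, HSc, Hlub. simpl in HSb, HSc.
  split; [lra|]. intros r Hr. apply NNPP. intros HnPr.
  assert (Rbar_le rho r); [|simpl in *; lra].
  apply Hlub. intros x [Hx0 Hx]. simpl. apply Rnot_lt_le. intros Hrx. apply HnPr, Hx. lra.
Qed.

(** * Plane geometry *)

Lemma sqrt_le_of_le_sq x y : 0 <= y -> x <= y ^ 2 -> sqrt x <= y.
Proof. intros Hy Hx. rewrite <- (sqrt_pow2 y Hy). apply sqrt_le_1_alt. exact Hx. Qed.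

Definition comb (g : R) (a b : R * R) : R * R :=
  ((1 - g) * fst a + g * fst b, (1 - g) * snd a + g * snd b).

Definition rot (a : R) (p : R * R) : R * R :=
  (cos a * fst p - sin a * snd p, sin a * fst p + cos a * snd p).

Definition reflect (p : R * R) : R * R := (fst p, - snd p).

Definition sqd (p q : R * R) : R := (fst p - fst q) ^ 2 + (snd p - snd q) ^ 2.

Definition dotv (p : R * R) (a : R) : R := fst p * cos a + snd p * sin a.

Lemma edist_sqd p q : edist p q = sqrt (sqd p q).
Proof. reflexivity. Qed.

Lemma sqd_sym p q : sqd p q = sqd q p.
Proof. unfold sqd. ring. Qed.

Lemma sqd_nonneg p q : 0 <= sqd p q.
Proof.
  unfold sqd. pose proof (pow2_ge_0 (fst p - fst q)). pose proof (pow2_ge_0 (snd p - snd q)). lra.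
Qed.

Lemma sqd_rot a p q : sqd (rot a p) (rot a q) = sqd p q.
Proof.
  unfold sqd, rot; simpl. pose proof (sin2_cos2 a) as H. unfold Rsqr in H.
  transitivity ((sin a * sin a + cos a * cos a) * ((fst p - fst q) ^ 2 + (snd p - snd q) ^ 2));
    [ring | rewrite H; ring].
Qed.

Lemma sqd_rot_self a z : sqd z (rot a z) = (2 - 2 * cos a) * sqd z (0, 0).
Proof.
  unfold sqd, rot; simpl. pose proof (sin2_cos2 a) as H. unfold Rsqr in H.
  transitivity ((sin a * sin a + cos a * cos a) * (fst z ^ 2 + snd z ^ 2)
                + (fst z ^ 2 + snd z ^ 2) - 2 * cos a * (fst z ^ 2 + snd z ^ 2));
    [ring | rewrite H; ring].
Qed.

Lemma sqd_reflect p q : sqd (reflect p) (reflect q) = sqd p q.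
Proof. unfold sqd, reflect; simpl. ring. Qed.

Lemma rot_comb a g p q : comb g (rot a p) (rot a q) = rot a (comb g p q).
Proof. unfold comb, rot. simpl. f_equal; ring. Qed.

Lemma reflect_comb g p q : reflect (comb g p q) = comb g (reflect p) (reflect q).
Proof. unfold reflect, comb; simpl. f_equal; ring. Qed.

Lemma sqd_comb g a b c :
  sqd (comb g a b) c = (1 - g) * sqd a c + g * sqd b c - g * (1 - g) * sqd a b.
Proof. unfold sqd, comb; simpl. ring. Qed.

Lemma sqd_comb_comb g1 g2 a b : sqd (comb g1 a b) (comb g2 a b) = (g2 - g1) ^ 2 * sqd a b.
Proof. unfold sqd, comb; simpl. ring. Qed.

Lemma sqd_comb_equidistant g a b p : sqd a p = sqd b p ->
  sqd (comb g a b) p = (g - 1 / 2) ^ 2 * sqd a b + sqd (comb (1 / 2) a b) p.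
Proof. intros H. rewrite !sqd_comb, H. field. Qed.

Lemma dotv_comb g p q a : dotv (comb g p q) a = (1 - g) * dotv p a + g * dotv q a.
Proof. unfold dotv, comb; simpl. ring. Qed.

Lemma edist_sym p q : edist p q = edist q p.
Proof. rewrite !edist_sqd, sqd_sym. reflexivity. Qed.

Lemma edist_nonneg p q : 0 <= edist p q.
Proof. apply sqrt_pos. Qed.

Lemma edist_of_sqd_scaled p q a b c : 0 <= c -> sqd p q = c ^ 2 * sqd a b ->
  edist p q = c * edist a b.
Proof.
  intros Hc H. rewrite !edist_sqd, H, sqrt_mult_alt by apply pow2_ge_0.
  rewrite sqrt_pow2 by exact Hc. reflexivity.
Qed.

Lemma edist_comb_comb g1 g2 a b : g1 <= g2 ->
  edist (comb g1 a b) (comb g2 a b) = (g2 - g1) * edist a b.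
Proof. intros H. apply edist_of_sqd_scaled; [lra | apply sqd_comb_comb]. Qed.

Lemma edist_comb_r g a b : g <= 1 -> edist (comb g a b) b = (1 - g) * edist a b.
Proof. intros H. apply edist_of_sqd_scaled; [lra | unfold sqd, comb; simpl; ring]. Qed.

Lemma edist_comb_l g a b : 0 <= g -> edist a (comb g a b) = g * edist a b.
Proof. intros H. apply edist_of_sqd_scaled; [lra | unfold sqd, comb; simpl; ring]. Qed.

Lemma dot_le_norm_mul a1 a2 b1 b2 :
  a1 * b1 + a2 * b2 <= sqrt (a1 ^ 2 + a2 ^ 2) * sqrt (b1 ^ 2 + b2 ^ 2).
Proof.
  rewrite <- sqrt_mult by nra.
  destruct (Rle_dec (a1 * b1 + a2 * b2) 0) as [H|H].
  - pose proof (sqrt_pos ((a1 ^ 2 + a2 ^ 2) * (b1 ^ 2 + b2 ^ 2))). lra.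
  - rewrite <- (sqrt_pow2 (a1 * b1 + a2 * b2)) by lra. apply sqrt_le_1_alt.
    pose proof (pow2_ge_0 (a1 * b2 - a2 * b1)). nra.
Qed.

Lemma edist_triangle p q r : edist p r <= edist p q + edist q r.
Proof.
  rewrite !edist_sqd. unfold sqd.
  set (a1 := fst p - fst q). set (a2 := snd p - snd q).
  set (b1 := fst q - fst r). set (b2 := snd q - snd r).
  replace (fst p - fst r) with (a1 + b1) by (unfold a1, b1; ring).
  replace (snd p - snd r) with (a2 + b2) by (unfold a2, b2; ring).
  pose proof (sqrt_pos (a1 ^ 2 + a2 ^ 2)). pose proof (sqrt_pos (b1 ^ 2 + b2 ^ 2)).
  rewrite <- (sqrt_pow2 (sqrt (a1 ^ 2 + a2 ^ 2) + sqrt (b1 ^ 2 + b2 ^ 2))) by lra.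
  apply sqrt_le_1_alt.
  pose proof (dot_le_norm_mul a1 a2 b1 b2).
  pose proof (sqrt_sqrt (a1 ^ 2 + a2 ^ 2) ltac:(nra)).
  pose proof (sqrt_sqrt (b1 ^ 2 + b2 ^ 2) ltac:(nra)). nra.
Qed.

Lemma dotv_sub_le_edist p q a : dotv p a - dotv q a <= edist p q.
Proof.
  pose proof (dot_le_norm_mul (fst p - fst q) (snd p - snd q) (cos a) (sin a)) as H.
  pose proof (sin2_cos2 a) as E. unfold Rsqr in E.
  replace (cos a ^ 2 + sin a ^ 2) with 1 in H by lra. rewrite sqrt_1 in H.
  unfold dotv. rewrite edist_sqd. unfold sqd. lra.
Qed.

(** * Chords of the polygon *)

Definition th (n : nat) : R := 2 * PI / INR n.

Definition chord (n : nat) (a b : R) : R := edist (pt n a) (pt n b).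

Definition chord_from (n : nat) (x t : R) : R := chord n x (x + t).

Section Polygon.
Variable n : nat.
Hypothesis Hn : (0 < n)%nat.

Let Hn_pos : 0 < INR n. Proof. apply lt_0_INR. exact Hn. Qed.

Lemma vert_eq k : vert n k = (cos (IZR k * th n), sin (IZR k * th n)).
Proof.
  unfold vert, th. replace (2 * PI * IZR k / INR n) with (IZR k * (2 * PI / INR n)) by (field; lra).
  reflexivity.
Qed.

Lemma pt_on_edge t k g : 0 <= g <= 1 -> INR n * t = IZR k + g ->
  pt n t = comb g (vert n k) (vert n (k + 1)).
Proof.
  intros Hg Ht. unfold pt. destruct (Req_dec g 1) as [->|E].
  - rewrite (Int_part_of_decomp _ (k + 1) 0), (frac_part_of_decomp _ (k + 1) 0)
      by (lra || (rewrite Ht, plus_IZR; simpl; ring)).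
    unfold comb. simpl. f_equal; ring.
  - rewrite (Int_part_of_decomp _ k g), (frac_part_of_decomp _ k g) by (auto; lra).
    reflexivity.
Qed.

Lemma pt_eq_comb_frac t : pt n t =
  comb (frac_part (INR n * t)) (vert n (Int_part (INR n * t))) (vert n (Int_part (INR n * t) + 1)).
Proof.
  apply pt_on_edge; [pose proof (frac_part_bounds (INR n * t)); lra|].
  apply Rplus_Int_part_frac_part.
Qed.

Lemma vert_add k j : vert n (k + j) = rot (IZR j * th n) (vert n k).
Proof.
  rewrite !vert_eq. unfold rot. simpl. rewrite plus_IZR.
  replace ((IZR k + IZR j) * th n) with (IZR j * th n + IZR k * th n) by ring.
  rewrite cos_plus, sin_plus. f_equal; ring.
Qed.

Lemma pt_add_vertices t j : pt n (t + IZR j / INR n) = rot (IZR j * th n) (pt n t).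
Proof.
  rewrite (pt_eq_comb_frac t).
  rewrite (pt_on_edge _ (Int_part (INR n * t) + j) (frac_part (INR n * t))).
  - replace (Int_part (INR n * t) + j + 1)%Z with ((Int_part (INR n * t) + 1) + j)%Z by ring.
    rewrite !vert_add. apply rot_comb.
  - pose proof (frac_part_bounds (INR n * t)). lra.
  - rewrite plus_IZR. transitivity (INR n * t + IZR j); [field; lra|].
    rewrite (Rplus_Int_part_frac_part (INR n * t)) at 1. ring.
Qed.

Lemma rot_mult_2PI m p : rot (IZR m * (2 * PI)) p = p.
Proof.
  assert (cos (IZR m * (2 * PI)) = 1 /\ sin (IZR m * (2 * PI)) = 0) as [C S].
  { destruct (Z.le_gt_cases 0 m) as [H|H].
    - destruct (IZN m H) as [k ->]. rewrite <- INR_IZR_INZ.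
      replace (INR k * (2 * PI)) with (0 + 2 * INR k * PI) by ring.
      rewrite cos_period, sin_period, cos_0, sin_0. auto.
    - destruct (IZN (- m) ltac:(lia)) as [k Hk].
      replace (IZR m * (2 * PI)) with (- (0 + 2 * INR k * PI))
        by (rewrite INR_IZR_INZ, <- Hk, opp_IZR; ring).
      rewrite cos_neg, sin_neg, cos_period, sin_period, cos_0, sin_0. split; [auto | ring]. }
  unfold rot. rewrite C, S. destruct p; simpl; f_equal; ring.
Qed.

Lemma pt_add_IZR t m : pt n (t + IZR m) = pt n t.
Proof.
  replace (t + IZR m) with (t + IZR (m * Z.of_nat n) / INR n)
    by (rewrite mult_IZR, <- INR_IZR_INZ; field; lra).
  rewrite pt_add_vertices. unfold th. rewrite mult_IZR, <- INR_IZR_INZ.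
  replace (IZR m * INR n * (2 * PI / INR n)) with (IZR m * (2 * PI)) by (field; lra).
  apply rot_mult_2PI.
Qed.

Lemma vert_opp k : vert n (- k) = reflect (vert n k).
Proof.
  rewrite !vert_eq. unfold reflect; simpl. rewrite opp_IZR.
  replace (- IZR k * th n) with (- (IZR k * th n)) by ring. rewrite cos_neg, sin_neg. auto.
Qed.

Lemma pt_opp t : pt n (- t) = reflect (pt n t).
Proof.
  rewrite (pt_eq_comb_frac t). set (k := Int_part (INR n * t)). set (g := frac_part (INR n * t)).
  pose proof (frac_part_bounds (INR n * t)) as Hg. fold g in Hg.
  rewrite (pt_on_edge _ (- k - 1) (1 - g)); [|lra|].
  - replace (- k - 1 + 1)%Z with (- k)%Z by ring. replace (- k - 1)%Z with (- (k + 1))%Z by ring.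
    rewrite !vert_opp, reflect_comb. unfold comb; simpl. f_equal; ring.
  - rewrite minus_IZR, opp_IZR. unfold k, g. transitivity (- (INR n * t)); [ring|].
    rewrite (Rplus_Int_part_frac_part (INR n * t)) at 1. simpl. ring.
Qed.

Lemma chord_sym a b : chord n a b = chord n b a.
Proof. apply edist_sym. Qed.

Lemma chord_add_vertices a b j :
  chord n (a + IZR j / INR n) (b + IZR j / INR n) = chord n a b.
Proof. unfold chord. rewrite !edist_sqd, !pt_add_vertices, sqd_rot. reflexivity. Qed.

Lemma chord_add_IZR a b m m' : chord n (a + IZR m) (b + IZR m') = chord n a b.
Proof. unfold chord. rewrite !pt_add_IZR. reflexivity. Qed.

Lemma chord_opp a b : chord n (- a) (- b) = chord n a b.
Proof. unfold chord. rewrite !edist_sqd, !pt_opp, sqd_reflect. reflexivity. Qed.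

Lemma chord_frac a b : chord n (frac_part a) (frac_part b) = chord n a b.
Proof.
  destruct (frac_part_int_offset a) as [ka Ha], (frac_part_int_offset b) as [kb Hb].
  rewrite <- (chord_add_IZR (frac_part a) (frac_part b) ka kb). f_equal; lra.
Qed.

Lemma chord_lift a b : chord n a b = chord_from n a (dP a b).
Proof.
  unfold chord_from. destruct (dP_lift a b) as [k Hk]. rewrite Hk at 1.
  rewrite <- (chord_add_IZR a (a + dP a b) 0 k). f_equal. simpl. ring.
Qed.

Lemma chord_from_edge0 x :
  exists x0, 0 <= INR n * x0 < 1 /\ forall t, chord_from n x t = chord_from n x0 t.
Proof.
  set (k := Int_part (INR n * x)). set (f := frac_part (INR n * x)).
  pose proof (frac_part_bounds (INR n * x)) as Hf. fold f in Hf.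
  assert (Hx : INR n * x = IZR k + f) by apply Rplus_Int_part_frac_part.
  exists (f / INR n). split.
  - replace (INR n * (f / INR n)) with f by (field; lra). exact Hf.
  - intros t. unfold chord_from. rewrite <- (chord_add_vertices (f / INR n) (f / INR n + t) k).
    f_equal; apply Rmult_eq_reg_l with (INR n); try lra; rewrite ?Rmult_plus_distr_l, Hx; field; lra.
Qed.

Lemma chord_from_0 x : chord_from n x 0 = 0.
Proof.
  unfold chord_from, chord. rewrite Rplus_0_r, edist_sqd. unfold sqd.
  rewrite !Rminus_diag, pow_i, Rplus_0_r by lia. apply sqrt_0.
Qed.

Lemma sqd_vert a b : sqd (vert n a) (vert n b) = 2 - 2 * cos ((IZR b - IZR a) * th n).
Proof.
  rewrite !vert_eq. unfold sqd; simpl.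
  replace ((IZR b - IZR a) * th n) with (IZR b * th n - IZR a * th n) by ring.
  rewrite cos_minus. pose proof (sin2_cos2 (IZR a * th n)). pose proof (sin2_cos2 (IZR b * th n)).
  unfold Rsqr in *. nra.
Qed.

Lemma sqd_vert_origin k : sqd (vert n k) (0, 0) = 1.
Proof.
  rewrite vert_eq. unfold sqd; simpl. pose proof (sin2_cos2 (IZR k * th n)). unfold Rsqr in *. lra.
Qed.

Lemma sqd_vert_succ k : sqd (vert n k) (vert n (k + 1)) = 2 - 2 * cos (th n).
Proof. rewrite sqd_vert, plus_IZR. do 3 f_equal. simpl. ring. Qed.

Lemma sqd_pt_origin x :
  sqd (pt n x) (0, 0) = 1 - 2 * edge_weight (INR n * x) * (1 - cos (th n)).
Proof.
  rewrite pt_eq_comb_frac, sqd_comb, !sqd_vert_origin, sqd_vert_succ. unfold edge_weight. ring.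
Qed.

Lemma dotv_vert j a : dotv (vert n j) a = cos (IZR j * th n - a).
Proof. rewrite vert_eq. unfold dotv; simpl. rewrite cos_minus. ring. Qed.

Lemma edist_vert_succ_le k : edist (vert n k) (vert n (k + 1)) <= 2.
Proof.
  rewrite edist_sqd, sqd_vert_succ. apply sqrt_le_of_le_sq; [lra|].
  pose proof (COS_bound (th n)). simpl. lra.
Qed.

Lemma pt_lipschitz s d : 0 <= d -> INR n * d < 1 ->
  edist (pt n s) (pt n (s + d)) <= 2 * INR n * d.
Proof.
  intros Hd0 Hd. set (t := s + d). set (k := Int_part (INR n * s)). set (g := frac_part (INR n * s)).
  pose proof (frac_part_bounds (INR n * s)) as Hg. fold g in Hg.
  assert (Hs : INR n * s = IZR k + g) by apply Rplus_Int_part_frac_part.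
  assert (Ht : INR n * t = INR n * s + INR n * d) by (unfold t; ring).
  assert (0 <= INR n * d) by (apply Rmult_le_pos; lra).
  rewrite (pt_on_edge s k g) by (auto; lra).
  destruct (Rle_dec (INR n * t) (IZR k + 1)) as [H1|H1].
  - rewrite (pt_on_edge t k (INR n * t - IZR k)) by lra.
    rewrite edist_comb_comb by lra. pose proof (edist_vert_succ_le k). nra.
  - set (h := INR n * t - IZR (k + 1)).
    assert (Hk1 : IZR (k + 1) = IZR k + 1) by (rewrite plus_IZR; auto).
    rewrite (pt_on_edge t (k + 1) h) by (unfold h; lra).
    pose proof (edist_triangle (comb g (vert n k) (vert n (k + 1))) (vert n (k + 1))
                  (comb h (vert n (k + 1)) (vert n (k + 1 + 1)))) as T.
    rewrite edist_comb_r, edist_comb_l in T by (unfold h; lra).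
    pose proof (edist_vert_succ_le k). pose proof (edist_vert_succ_le (k + 1)).
    unfold h in *. nra.
Qed.

Lemma chord_from_lipschitz x s t : Rabs (t - s) < / INR n ->
  Rabs (chord_from n x t - chord_from n x s) <= 2 * INR n * Rabs (t - s).
Proof.
  intros Hd. unfold chord_from, chord.
  assert (Hnd : INR n * Rabs (t - s) < 1).
  { apply Rmult_lt_compat_l with (r := INR n) in Hd; [|lra]. rewrite Rinv_r in Hd; lra. }
  assert (Hpp : edist (pt n (x + s)) (pt n (x + t)) <= 2 * INR n * Rabs (t - s)).
  { destruct (Rle_dec s t) as [H|H].
    - rewrite Rabs_right in * by lra. replace (x + t) with (x + s + (t - s)) by ring.
      apply pt_lipschitz; lra.
    - rewrite Rabs_left in * by lra. rewrite edist_sym.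
      replace (x + s) with (x + t + - (t - s)) by ring.
      apply pt_lipschitz; lra. }
  pose proof (edist_triangle (pt n x) (pt n (x + s)) (pt n (x + t))) as T1.
  pose proof (edist_triangle (pt n x) (pt n (x + t)) (pt n (x + s))) as T2.
  rewrite (edist_sym (pt n (x + t)) (pt n (x + s))) in T2.
  apply Rabs_le. lra.
Qed.

Lemma chord_from_continuous x : continuity (chord_from n x).
Proof.
  intros t eps Heps.
  exists (Rmin (/ INR n) (eps / (4 * INR n))). split.
  - apply Rmin_pos; [apply Rinv_0_lt_compat; lra | apply Rdiv_lt_0_compat; lra].
  - intros y [_ Hy]. simpl in *. unfold R_dist in *.
    pose proof (Rmin_l (/ INR n) (eps / (4 * INR n))).
    pose proof (Rmin_r (/ INR n) (eps / (4 * INR n))).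
    pose proof (chord_from_lipschitz x t y ltac:(lra)) as Hlip.
    assert (Hbound : 2 * INR n * Rabs (y - t) <= 2 * INR n * (eps / (4 * INR n)))
      by (apply Rmult_le_compat_l; lra).
    replace (2 * INR n * (eps / (4 * INR n))) with (eps / 2) in Hbound by (field; lra). lra.
Qed.

Lemma chord_from_add_IZR x k t : chord_from n (x + IZR k) t = chord_from n x t.
Proof.
  unfold chord_from. replace (x + IZR k + t) with (x + t + IZR k) by ring. apply chord_add_IZR.
Qed.

Lemma chord_from_opp y s : chord_from n (- y) s = chord_from n (y - s) s.
Proof.
  unfold chord_from. rewrite <- chord_opp, chord_sym. f_equal; ring.
Qed.

Lemma arrow_dP r u w : inP u -> inP w -> arrow n r u w ->
  0 < dP u w <= 1 / 2 /\ chord_from n u (dP u w) < r.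
Proof.
  intros Hu Hw [Hne [Hd Hle]]. pose proof (dP_pos u w Hu Hw Hne).
  rewrite (dP_swap u w Hu Hw Hne) in Hle. split; [lra|].
  rewrite <- chord_lift. exact Hd.
Qed.

Lemma cyclicVR_between r x y z : cyclicVR n r -> x < y < z -> z - x <= 1 / 2 ->
  chord n x z < r -> chord n y z < r.
Proof.
  intros Hc Hxyz Hzx Hr.
  assert (Hd : forall a b, a < b -> b - a < 1 -> dP (frac_part a) (frac_part b) = b - a)
    by (intros a b Hab Hba; rewrite dP_frac; apply frac_part_id; lra).
  assert (Hzx' : dP (frac_part z) (frac_part x) = 1 - (z - x))
    by (rewrite dP_frac; apply (frac_part_of_decomp _ (-1)); simpl; lra).
  assert (Harr : arrow n r (frac_part x) (frac_part z)).
  { split; [|split].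
    - intros E. pose proof (Hd x z ltac:(lra) ltac:(lra)) as D. rewrite E, dP_self in D. lra.
    - change (chord n (frac_part x) (frac_part z) < r). rewrite chord_frac. exact Hr.
    - rewrite Hd, Hzx' by lra. lra. }
  destruct (Hc _ _ (inP_frac_part x) (inP_frac_part z) Harr (frac_part y) (inP_frac_part y))
    as [_ [_ [Hyz _]]]; [rewrite !Hd by lra; lra|].
  change (chord n (frac_part y) (frac_part z) < r) in Hyz. rewrite chord_frac in Hyz. exact Hyz.
Qed.

Lemma cyclicVR_exists_chord_from_ge r x y : cyclicVR n r -> r <= chord n x y ->
  exists t, 0 < t <= 1 / 2 /\ r <= chord_from n x t.
Proof.
  intros Hc Hy. apply NNPP. intros Hno.
  assert (Hhalf : forall t, 0 < t <= 1 / 2 -> chord_from n x t < r).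
  { intros t Ht. apply Rnot_le_lt. intros Hle. apply Hno. exists t. auto. }
  assert (Hturn : forall t, 0 < t < 1 -> chord_from n x t < r).
  { intros t Ht. destruct (Rle_dec t (1 / 2)) as [E|E]; [apply Hhalf; lra|].
    assert (Hwrap : forall a, chord n a (x + 1) = chord n a x)
      by (intros a; rewrite <- (chord_add_IZR a x 0 1); f_equal; simpl; ring).
    pose proof (cyclicVR_between r (x + 1 / 2) (x + t) (x + 1) Hc ltac:(lra) ltac:(lra)) as H.
    rewrite !Hwrap, !(chord_sym _ x) in H. apply H, Hhalf. lra. }
  rewrite chord_lift in Hy. destruct (dP_bounds x y) as [[H0|H0] H1].
  - pose proof (Hturn (dP x y) ltac:(lra)). lra.
  - rewrite <- H0, chord_from_0 in Hy.
    pose proof (Hhalf (1 / 2) ltac:(lra)). pose proof (edist_nonneg (pt n x) (pt n (x + 1 / 2))).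
    unfold chord_from, chord in *. lra.
Qed.

Lemma off0_add_IZR r x k : off0 n r (x + IZR k) = off0 n r x.
Proof.
  unfold off0. f_equal. apply Glb_Rbar_eqset. intros t.
  replace (x + IZR k + t) with ((x + t) + IZR k) by ring. rewrite !pt_add_IZR. tauto.
Qed.

Lemma frac_n_dP a x : frac_part (INR n * x) = frac_part (INR n * a + INR n * dP a x).
Proof.
  destruct (dP_lift a x) as [k Hk]. rewrite Hk at 1.
  replace (INR n * (a + dP a x + IZR k)) with (INR n * a + INR n * dP a x + IZR (Z.of_nat n * k))
    by (rewrite mult_IZR, <- INR_IZR_INZ; ring).
  apply frac_part_add_IZR.
Qed.

Lemma edge_weight_n_dP a x : edge_weight (INR n * x) = edge_weight (INR n * a + INR n * dP a x).
Proof. unfold edge_weight. rewrite (frac_n_dP a x). reflexivity. Qed.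

Lemma half_edge_step p : inP p ->
  let q := frac_part (p + / (2 * INR n)) in
  inP q /\ dP p q = / (2 * INR n) /\
  frac_part (INR n * q) = frac_part (frac_part (INR n * p) + / 2).
Proof.
  intros Hp q. assert (Hh : 0 < / (2 * INR n) < 1).
  { split; [apply Rinv_0_lt_compat; lra|]. rewrite <- Rinv_1. apply Rinv_lt_contravar; [lra|].
    assert (1 <= INR n) by (apply (le_INR 1); lia). lra. }
  assert (Hd : dP p q = / (2 * INR n)).
  { unfold q. rewrite <- (frac_part_id p) at 1 by exact Hp. rewrite dP_frac.
    replace (p + / (2 * INR n) - p) with (/ (2 * INR n)) by ring. apply frac_part_id. lra. }
  split; [apply inP_frac_part | split; [exact Hd|]].
  rewrite (frac_n_dP p q), Hd. replace (INR n * / (2 * INR n)) with (/ 2) by (field; lra).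
  rewrite (Rplus_Int_part_frac_part (INR n * p)) at 1.
  replace (IZR (Int_part (INR n * p)) + frac_part (INR n * p) + / 2)
    with (frac_part (INR n * p) + / 2 + IZR (Int_part (INR n * p))) by ring.
  apply frac_part_add_IZR.
Qed.

Lemma dP_ge_of_same_frac p q : inP p -> inP q -> p <> q ->
  frac_part (INR n * p) = frac_part (INR n * q) -> / INR n <= dP p q.
Proof.
  intros Hp Hq Hpq Hpq'. pose proof (dP_pos p q Hp Hq Hpq) as Hd.
  rewrite (frac_n_dP p q) in Hpq'. destruct (frac_part_eq_shift _ _ Hpq') as [k Hk].
  assert (Hk0 : 0 < IZR k)
    by (replace (IZR k) with (INR n * dP p q) by lra; apply Rmult_lt_0_compat; lra).
  assert (1 <= IZR k) by (apply IZR_le; apply lt_IZR in Hk0; lia).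
  apply Rmult_le_reg_l with (INR n); [lra|]. rewrite Rinv_r by lra. lra.
Qed.

(* Between two crossings of opposite kind the edge position moves by exactly half an edge,
   since otherwise the point half an edge after [a] would be a crossing in between. *)
Lemma dP_adjacent_half a b : inP a -> inP b ->
  frac_part (INR n * b) = frac_part (frac_part (INR n * a) + / 2) ->
  (forall x, inP x -> 0 < dP a x < dP a b ->
     frac_part (INR n * x) <> frac_part (frac_part (INR n * a) + / 2)) ->
  INR n * dP a b = / 2.
Proof.
  intros Ha Hb Hab Hnone.
  rewrite (frac_n_dP a b), (Rplus_Int_part_frac_part (INR n * a)) in Hab at 1.
  replace (IZR (Int_part (INR n * a)) + frac_part (INR n * a) + INR n * dP a b)
    with (frac_part (INR n * a) + INR n * dP a b + IZR (Int_part (INR n * a))) in Hab by ring.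
  rewrite frac_part_add_IZR in Hab. symmetry in Hab. destruct (frac_part_eq_shift _ _ Hab) as [k Hk].
  pose proof (dP_bounds a b). assert (0 <= INR n * dP a b) by (apply Rmult_le_pos; lra).
  assert (Hk0 : (0 <= k)%Z) by (apply le_IZR; apply Rnot_lt_le; intros Hneg;
    assert (IZR k <= -1) by (apply IZR_le; apply lt_IZR in Hneg; lia); lra).
  destruct (Z.eq_dec k 0) as [->|Hk1]; [simpl in Hk; lra|].
  assert (1 <= IZR k) by (apply IZR_le; lia).
  destruct (half_edge_step a Ha) as [Hx [Hdx Hfx]].
  exfalso. apply (Hnone _ Hx); [|exact Hfx]. rewrite Hdx.
  split; [apply Rinv_0_lt_compat; lra|].
  apply Rmult_lt_reg_l with (INR n); [lra|]. replace (INR n * / (2 * INR n)) with (/ 2) by (field; lra).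
  lra.
Qed.

End Polygon.

(** * Distances from the first edge *)

Lemma sin_le_of_between a b : 0 <= a <= PI / 2 -> a <= b <= PI - a -> sin a <= sin b.
Proof.
  intros Ha Hb. pose proof PI_RGT_0. destruct (Rle_dec b (PI / 2)).
  - apply sin_incr_1; lra.
  - rewrite <- (sin_PI_x b). apply sin_incr_1; lra.
Qed.

Section LargePolygon.
Variable n : nat.
Hypothesis Hn6 : (6 <= n)%nat.

Let Hn : (0 < n)%nat. Proof. lia. Qed.
Let Hn6' : 6 <= INR n. Proof. replace 6 with (INR 6) by (simpl; ring). apply le_INR, Hn6. Qed.

Lemma th_pos : 0 < th n.
Proof. unfold th. pose proof PI_RGT_0. apply Rdiv_lt_0_compat; lra. Qed.

Lemma th_le_PI3 : th n <= PI / 3.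
Proof.
  unfold th. pose proof PI_RGT_0. apply Rle_trans with (2 * PI / 6); [|lra].
  unfold Rdiv. apply Rmult_le_compat_l; [lra|]. apply Rinv_le_contravar; lra.
Qed.

Lemma cos_th_bounds : 0 <= cos (th n) < 1.
Proof.
  pose proof th_pos. pose proof th_le_PI3. pose proof PI_RGT_0. split.
  - apply cos_ge_0; lra.
  - rewrite <- cos_0. apply cos_decreasing_1; lra.
Qed.

Lemma cos_half_th_bounds : 3 / 4 <= cos (th n / 2) ^ 2 /\ 0 < cos (th n / 2) <= 1.
Proof.
  pose proof th_pos. pose proof th_le_PI3. pose proof PI_RGT_0.
  assert (Hc : cos (PI / 6) <= cos (th n / 2)) by (apply cos_decr_1; lra).
  rewrite cos_PI6 in Hc. assert (Hs : sqrt 3 * sqrt 3 = 3) by (apply sqrt_sqrt; lra).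
  assert (0 < sqrt 3) by (apply sqrt_lt_R0; lra). pose proof (COS_bound (th n / 2)). nra.
Qed.

Lemma cos_th_half : cos (th n) = 2 * cos (th n / 2) ^ 2 - 1.
Proof. replace (th n) with (2 * (th n / 2)) at 1 by field. rewrite cos_2a_cos. ring. Qed.

Lemma cos_3_half_th : cos (3 * (th n / 2)) = 4 * cos (th n / 2) ^ 3 - 3 * cos (th n / 2).
Proof.
  set (a := th n / 2). replace (3 * a) with (2 * a + a) by ring.
  rewrite cos_plus, cos_2a_cos, sin_2a.
  pose proof (sin2_cos2 a) as E. unfold Rsqr in E.
  replace (2 * sin a * cos a * sin a) with (2 * cos a * (sin a * sin a)) by ring.
  replace (sin a * sin a) with (1 - cos a * cos a) by lra. ring.
Qed.

Lemma cos_step_ge i : (INR i + 1) * th n <= PI ->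
  1 - cos (th n) <= cos (INR i * th n) - cos ((INR i + 1) * th n).
Proof.
  intros Hi. pose proof th_pos. pose proof th_le_PI3. pose proof PI_RGT_0. pose proof (pos_INR i).
  rewrite <- cos_0 at 1. rewrite !form2.
  replace ((0 - th n) / 2) with (- (th n / 2)) by field.
  replace ((INR i * th n - (INR i + 1) * th n) / 2) with (- (th n / 2)) by field.
  replace ((0 + th n) / 2) with (th n / 2) by field.
  rewrite sin_neg.
  assert (Hs : 0 < sin (th n / 2)) by (apply sin_gt_0; lra).
  assert (sin (th n / 2) <= sin ((INR i * th n + (INR i + 1) * th n) / 2))
    by (apply sin_le_of_between; split; nra).
  nra.
Qed.

Definition edge0_point (f : R) : R * R := comb f (vert n 0) (vert n 1).

Definition sqd_to_vert (f : R) (j : Z) : R := sqd (edge0_point f) (vert n j).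

(* Along edge [j] the squared distance from [edge0_point f] is the quadratic
   [(1 - g) a_j + g a_(j+1) - g (1 - g) s] with [s] the squared side, which
   increases in [g] when the gap [a_(j+1) - a_j] is at least [s]. *)
Definition steep_edge (f : R) (j : Z) : Prop :=
  sqd_to_vert f (j + 1) - sqd_to_vert f j >= 2 - 2 * cos (th n).

Lemma sqd_to_vert_eq f j : sqd_to_vert f j =
  (1 - f) * (2 - 2 * cos (IZR j * th n)) + f * (2 - 2 * cos ((IZR j - 1) * th n))
  - f * (1 - f) * (2 - 2 * cos (th n)).
Proof.
  unfold sqd_to_vert, edge0_point. rewrite sqd_comb, !sqd_vert by exact Hn.
  replace (IZR j - IZR 0) with (IZR j) by (simpl; ring).
  replace (IZR 1 - IZR 0) with 1 by (simpl; ring). replace (IZR 1) with 1 by reflexivity.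
  rewrite Rmult_1_l. ring.
Qed.

Lemma sqd_to_vert_gap f j : sqd_to_vert f (j + 1) - sqd_to_vert f j =
  2 * ((1 - f) * (cos (IZR j * th n) - cos ((IZR j + 1) * th n))
       + f * (cos ((IZR j - 1) * th n) - cos (IZR j * th n))).
Proof.
  rewrite !sqd_to_vert_eq, plus_IZR. replace (IZR 1) with 1 by reflexivity.
  replace (IZR j + 1 - 1) with (IZR j) by ring. ring.
Qed.

Lemma steep_edge_of_small f (j : nat) : 0 <= f <= 1 -> (1 <= j)%nat -> (2 * (j + 1) <= n)%nat ->
  steep_edge f (Z.of_nat j).
Proof.
  intros Hf Hj Hjn. unfold steep_edge. rewrite sqd_to_vert_gap, <- INR_IZR_INZ.
  pose proof th_pos. pose proof PI_RGT_0.
  assert (HI : (INR j + 1) * th n <= PI).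
  { apply le_INR in Hjn. rewrite mult_INR, plus_INR in Hjn. simpl in Hjn. unfold th.
    apply Rmult_le_reg_r with (INR n); [lra|].
    replace ((INR j + 1) * (2 * PI / INR n) * INR n) with (PI * (2 * (INR j + 1))) by (field; lra).
    nra. }
  destruct j as [|j']; [lia|]. rewrite S_INR in *.
  pose proof (cos_step_ge (S j')) as H1. rewrite S_INR in H1. specialize (H1 HI).
  pose proof (cos_step_ge j' ltac:(nra)) as H2.
  replace (INR j' + 1 - 1) with (INR j') by ring. apply Rle_ge. nra.
Qed.

Definition edge0_sqdist (f u : R) : R := sqd (edge0_point f) (pt n (u / INR n)).

Lemma edge0_sqdist_on_edge f (j : Z) u : IZR j <= u <= IZR j + 1 ->
  edge0_sqdist f u = (1 - (u - IZR j)) * sqd_to_vert f j + (u - IZR j) * sqd_to_vert f (j + 1)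
                     - (u - IZR j) * (1 - (u - IZR j)) * (2 - 2 * cos (th n)).
Proof.
  intros Hu. unfold edge0_sqdist.
  rewrite (pt_on_edge n _ j (u - IZR j)) by (lra || (field; apply not_0_INR; lia)).
  rewrite sqd_sym, sqd_comb, <- (sqd_vert_succ n Hn j). unfold sqd_to_vert.
  rewrite !(sqd_sym (edge0_point f)). reflexivity.
Qed.

Lemma edge0_sqdist_increasing_on_edge f (j : Z) u1 u2 : steep_edge f j ->
  IZR j <= u1 -> u1 < u2 -> u2 <= IZR j + 1 -> edge0_sqdist f u1 < edge0_sqdist f u2.
Proof.
  intros Hc H1 H2 H3. rewrite !(edge0_sqdist_on_edge f j) by lra.
  unfold steep_edge in Hc. pose proof cos_th_bounds.
  set (g1 := u1 - IZR j). set (g2 := u2 - IZR j). set (s := 2 - 2 * cos (th n)) in *.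
  assert (0 <= g1 < g2) by (unfold g1, g2; lra). assert (g2 <= 1) by (unfold g2; lra).
  assert (0 <= (g2 - g1) * (sqd_to_vert f (j + 1) - sqd_to_vert f j - s)) by (apply Rmult_le_pos; lra).
  assert (0 < (g2 * g2 - g1 * g1) * s) by (apply Rmult_lt_0_compat; [nra | unfold s; lra]).
  nra.
Qed.

Lemma edge0_sqdist_first_edge f u : 0 <= f -> f <= u <= 1 ->
  edge0_sqdist f u = (u - f) ^ 2 * (2 - 2 * cos (th n)).
Proof.
  intros Hf Hu. unfold edge0_sqdist, edge0_point.
  rewrite (pt_on_edge n _ 0 u) by (lra || (simpl; field; apply not_0_INR; lia)).
  rewrite sqd_comb_comb, sqd_vert_succ by exact Hn. reflexivity.
Qed.

Lemma edge0_sqdist_increasing f (K : nat) : 0 <= f < 1 ->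
  (forall j : nat, (1 <= j)%nat -> (j < K)%nat -> steep_edge f (Z.of_nat j)) ->
  forall u1 u2, f <= u1 -> u1 < u2 -> u2 <= INR K -> edge0_sqdist f u1 < edge0_sqdist f u2.
Proof.
  intros Hf. induction K as [|K IH]; intros Hc u1 u2 H1 H2 H3; [simpl in *; lra|].
  rewrite S_INR in H3.
  assert (IH' : forall u1 u2, f <= u1 -> u1 < u2 -> u2 <= INR K ->
                              edge0_sqdist f u1 < edge0_sqdist f u2)
    by (apply IH; intros j Hj1 Hj2; apply Hc; lia).
  destruct (Rle_dec u2 (INR K)) as [E|E]; [apply IH'; lra|].
  destruct K as [|K].
  - simpl in *. rewrite !edge0_sqdist_first_edge by lra. pose proof cos_th_bounds.
    apply Rmult_lt_compat_r; [lra | nra].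
  - assert (HcK : steep_edge f (Z.of_nat (S K))) by (apply Hc; lia).
    destruct (Rle_dec (INR (S K)) u1) as [E1|E1].
    + apply (edge0_sqdist_increasing_on_edge f (Z.of_nat (S K))); rewrite <- ?INR_IZR_INZ; auto; lra.
    + apply Rlt_trans with (edge0_sqdist f (INR (S K))); [apply IH'; lra|].
      apply (edge0_sqdist_increasing_on_edge f (Z.of_nat (S K))); rewrite <- ?INR_IZR_INZ; auto; lra.
Qed.

Lemma dotv_edge0_point f a : dotv (edge0_point f) a = (1 - f) * cos a + f * cos (th n - a).
Proof.
  unfold edge0_point. rewrite dotv_comb, !dotv_vert by exact Hn. simpl IZR.
  rewrite Rmult_0_l, Rmult_1_l, Rminus_0_l, cos_neg. reflexivity.
Qed.

Lemma th_mul_half_even (N : nat) : n = (2 * N)%nat -> INR N * th n = PI.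
Proof.
  intros HN. unfold th. rewrite HN, mult_INR. simpl (INR 2).
  field. apply not_0_INR. lia.
Qed.

Lemma th_mul_half_odd (J : nat) : n = (2 * J + 1)%nat -> INR J * th n = PI - th n / 2.
Proof.
  intros HJ. unfold th. rewrite HJ, plus_INR, mult_INR. simpl (INR 2). simpl (INR 1).
  pose proof (pos_INR J). field. lra.
Qed.

Lemma edist_opposite_edge_even (N : nat) f g : n = (2 * N)%nat ->
  2 * cos (th n / 2) <= edist (edge0_point f) (comb g (vert n (Z.of_nat N)) (vert n (Z.of_nat N + 1))).
Proof.
  intros HN. eapply Rle_trans; [|apply dotv_sub_le_edist with (a := th n / 2)].
  pose proof (th_mul_half_even N HN) as HNth.
  rewrite dotv_edge0_point, dotv_comb, !dotv_vert by exact Hn.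
  rewrite plus_IZR, <- INR_IZR_INZ, HNth. simpl (IZR 1).
  replace (th n - th n / 2) with (th n / 2) by field.
  replace ((INR N + 1) * th n - th n / 2) with (th n / 2 + PI) by lra.
  rewrite neg_cos, Rtrigo_facts.cos_pi_minus. lra.
Qed.

Lemma edist_far_edge_odd (J : nat) f g : n = (2 * J + 1)%nat -> 0 <= g <= 1 / 2 ->
  cos (th n / 2) + cos (th n / 2) ^ 2 <=
  edist (edge0_point f) (comb g (vert n (Z.of_nat J + 1)) (vert n (Z.of_nat J + 1 + 1))).
Proof.
  intros HJ Hg. eapply Rle_trans; [|apply dotv_sub_le_edist with (a := th n / 2)].
  pose proof (th_mul_half_odd J HJ) as HJth. pose proof cos_th_half. pose proof cos_half_th_bounds.
  rewrite dotv_edge0_point, dotv_comb, !dotv_vert by exact Hn.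
  rewrite !plus_IZR, <- INR_IZR_INZ. simpl (IZR 1).
  replace (th n - th n / 2) with (th n / 2) by field.
  replace ((INR J + 1) * th n - th n / 2) with PI by lra.
  replace ((INR J + 1 + 1) * th n - th n / 2) with (th n + PI) by lra.
  rewrite neg_cos, cos_PI.
  set (C := cos (th n / 2)) in *.
  assert (g * (1 - C ^ 2) <= 1 / 2 * (1 - C ^ 2)) by (apply Rmult_le_compat_r; nra).
  nra.
Qed.

Lemma edist_middle_edge_odd (J : nat) f g : n = (2 * J + 1)%nat -> f <= 3 / 4 ->
  1 - 3 / 4 * (1 - cos (th n)) + cos (th n / 2) <=
  edist (edge0_point f) (comb g (vert n (Z.of_nat J)) (vert n (Z.of_nat J + 1))).
Proof.
  intros HJ Hf. eapply Rle_trans; [|apply dotv_sub_le_edist with (a := 0)].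
  pose proof (th_mul_half_odd J HJ) as HJth. pose proof cos_th_bounds.
  rewrite dotv_edge0_point, dotv_comb, !dotv_vert by exact Hn.
  rewrite plus_IZR, <- INR_IZR_INZ. simpl (IZR 1). rewrite !Rminus_0_r, cos_0, HJth.
  replace ((INR J + 1) * th n) with (th n / 2 + PI) by lra.
  rewrite neg_cos, Rtrigo_facts.cos_pi_minus. nra.
Qed.

Lemma steep_edge_middle_odd (J : nat) f : n = (2 * J + 1)%nat -> 3 / 4 <= f <= 1 ->
  steep_edge f (Z.of_nat J).
Proof.
  intros HJ Hf. unfold steep_edge. rewrite sqd_to_vert_gap, <- INR_IZR_INZ.
  pose proof (th_mul_half_odd J HJ) as HJth. pose proof cos_th_half as HC2.
  pose proof cos_half_th_bounds as [HC1 HC0].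
  rewrite HJth. replace ((INR J + 1) * th n) with (th n / 2 + PI) by lra.
  replace ((INR J - 1) * th n) with (PI - 3 * (th n / 2)) by lra.
  rewrite neg_cos, !Rtrigo_facts.cos_pi_minus, cos_3_half_th.
  set (C := cos (th n / 2)) in *. rewrite HC2.
  apply Rle_ge. assert (C >= 2 / 3) by nra. assert (f * C >= 3 / 4 * C) by nra.
  assert (0 <= (1 - C ^ 2) * (8 * (f * C) - 4)) by (apply Rmult_le_pos; nra). nra.
Qed.

Lemma pt_edge0 g : 0 <= g <= 1 -> pt n (g / INR n) = edge0_point g.
Proof. intros Hg. apply pt_on_edge; [exact Hg | simpl; field; apply not_0_INR; lia]. Qed.

Lemma chord_from_edge0_sqdist x s : 0 <= INR n * x < 1 ->
  chord_from n x s = sqrt (edge0_sqdist (INR n * x) (INR n * x + INR n * s)).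
Proof.
  intros Hx. assert (INR n <> 0) by (apply not_0_INR; lia).
  unfold chord_from, chord, edge0_sqdist. rewrite edist_sqd, <- pt_edge0 by lra.
  do 3 f_equal; field; assumption.
Qed.

Definition antipode_of_mid : R := / (2 * INR n) + / 2.

Lemma pt_antipode_of_mid_equidistant :
  sqd (vert n 0) (pt n antipode_of_mid) = sqd (vert n 1) (pt n antipode_of_mid).
Proof.
  unfold antipode_of_mid. destruct (Nat.Even_or_Odd n) as [[N HN]|[J HJ]].
  - pose proof (th_mul_half_even N HN) as HNth.
    rewrite (pt_on_edge n _ (Z.of_nat N) (1 / 2))
      by (lra || (rewrite <- INR_IZR_INZ, HN, mult_INR; simpl; field; apply not_0_INR; lia)).
    rewrite !(sqd_sym (vert n _)), !sqd_comb, !sqd_vert by exact Hn.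
    rewrite plus_IZR, <- INR_IZR_INZ. simpl (IZR 0). simpl (IZR 1).
    replace ((0 - INR N) * th n) with (- PI) by lra.
    replace ((1 - INR N) * th n) with (- (PI - th n)) by lra.
    replace ((0 - (INR N + 1)) * th n) with (- (th n + PI)) by lra.
    replace ((1 - (INR N + 1)) * th n) with (- PI) by lra.
    rewrite !cos_neg, neg_cos, Rtrigo_facts.cos_pi_minus. field.
  - pose proof (th_mul_half_odd J HJ) as HJth.
    rewrite (pt_on_edge n _ (Z.of_nat J + 1) 0)
      by (lra || (rewrite plus_IZR, <- INR_IZR_INZ, HJ, plus_INR, mult_INR; simpl; field;
                  pose proof (pos_INR J); lra)).
    rewrite !(sqd_sym (vert n _)), !sqd_comb, !sqd_vert by exact Hn.
    rewrite !plus_IZR, <- INR_IZR_INZ. simpl (IZR 0). simpl (IZR 1).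
    replace ((0 - (INR J + 1)) * th n) with (- (th n / 2 + PI)) by lra.
    replace ((1 - (INR J + 1)) * th n) with (- (PI - th n / 2)) by lra.
    replace ((0 - (INR J + 1 + 1)) * th n) with (- (PI + 3 * (th n / 2))) by lra.
    replace ((1 - (INR J + 1 + 1)) * th n) with (- (th n / 2 + PI)) by lra.
    rewrite !cos_neg, neg_cos, Rtrigo_facts.cos_pi_minus. ring.
Qed.

Lemma sqd_edge0_antipode g : sqd (edge0_point g) (pt n antipode_of_mid) =
  (g - 1 / 2) ^ 2 * (2 - 2 * cos (th n)) + sqd (edge0_point (1 / 2)) (pt n antipode_of_mid).
Proof.
  unfold edge0_point. rewrite sqd_comb_equidistant by exact pt_antipode_of_mid_equidistant.
  rewrite sqd_vert_succ by exact Hn. reflexivity.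
Qed.

Lemma pt_edge0_mid : pt n (/ (2 * INR n)) = edge0_point (1 / 2).
Proof.
  rewrite <- pt_edge0 by lra. f_equal. field. apply not_0_INR. lia.
Qed.

Lemma pt_vert1 : pt n (/ INR n) = edge0_point 1.
Proof.
  rewrite <- pt_edge0 by lra. f_equal. field. apply not_0_INR. lia.
Qed.

Lemma chord_mid_lt_chord_vert1 :
  chord n (/ (2 * INR n)) antipode_of_mid < chord n (/ INR n) antipode_of_mid.
Proof.
  unfold chord. rewrite pt_edge0_mid, pt_vert1, !edist_sqd, (sqd_edge0_antipode 1).
  apply sqrt_lt_1_alt. split; [apply sqd_nonneg|]. pose proof cos_th_bounds. nra.
Qed.

Lemma exists_chord_ge_mid x : exists y, chord n (/ (2 * INR n)) antipode_of_mid <= chord n x y.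
Proof.
  destruct (chord_from_edge0 n Hn x) as [x0 [Hx0 HD]].
  exists (x + (antipode_of_mid - x0)). fold (chord_from n x (antipode_of_mid - x0)).
  rewrite HD. unfold chord_from, chord.
  replace (x0 + (antipode_of_mid - x0)) with antipode_of_mid by ring.
  rewrite pt_edge0_mid, !edist_sqd.
  replace x0 with (INR n * x0 / INR n) at 1 by (field; apply not_0_INR; lia).
  rewrite pt_edge0, (sqd_edge0_antipode (INR n * x0)) by lra.
  apply sqrt_le_1_alt. pose proof cos_th_bounds. pose proof (pow2_ge_0 (INR n * x0 - 1 / 2)). nra.
Qed.

(* The arrow from the midpoint of edge 0 to the antipodal point passes over vertex 1,
   which is farther from that point. *)
Lemma not_cyclicVR_between r :
  chord n (/ (2 * INR n)) antipode_of_mid < r <= chord n (/ INR n) antipode_of_mid -> ~ cyclicVR n r.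
Proof.
  intros Hr Hc. set (m0 := / (2 * INR n)). set (w0 := / INR n).
  assert (Hn2 : 0 < m0 < w0 /\ w0 < 1 / 2).
  { unfold m0, w0. split; [split|].
    - apply Rinv_0_lt_compat; lra.
    - apply Rinv_lt_contravar; nra.
    - replace (1 / 2) with (/ 2) by field. apply Rinv_lt_contravar; lra. }
  unfold antipode_of_mid, chord in *. fold m0 in Hr |- *. fold w0 in Hr.
  assert (Hd01 : dP m0 (m0 + / 2) = 1 / 2) by (apply (dP_of_lift _ _ _ 0); simpl; lra).
  assert (Hd10 : dP (m0 + / 2) m0 = 1 / 2) by (apply (dP_of_lift _ _ _ (-1)); simpl; lra).
  assert (Hdw : dP m0 w0 = w0 - m0) by (apply (dP_of_lift _ _ _ 0); simpl; lra).
  assert (Harr : arrow n r m0 (m0 + / 2)) by (split; [lra | split; [apply Hr | lra]]).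
  destruct (Hc m0 (m0 + / 2) ltac:(split; lra) ltac:(split; lra) Harr w0 ltac:(split; lra))
    as [_ [_ [Hlt _]]]; [rewrite Hdw, Hd01; lra | lra].
Qed.

End LargePolygon.

(** * Stars of a polygon with (2l+1) m vertices *)

(* With [C = cos a] the left-hand sides below are [2 + 2 cos (3 a)]. *)
Lemma poly_bound_far_edge C : 3 / 4 <= C ^ 2 -> 0 < C <= 1 ->
  2 + (8 * C ^ 3 - 6 * C) <= (C + C ^ 2) ^ 2.
Proof.
  intros H1 H2.
  assert (E : (C + C ^ 2) ^ 2 - (2 + (8 * C ^ 3 - 6 * C)) =
              (1 - C) * (- (C ^ 3 - 5 * C ^ 2 - 4 * C + 2))) by ring.
  assert (0 <= (1 - C) * (- (C ^ 3 - 5 * C ^ 2 - 4 * C + 2))) by (apply Rmult_le_pos; nra).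
  lra.
Qed.

Lemma poly_bound_middle_edge C : 3 / 4 <= C ^ 2 -> 0 < C <= 1 ->
  2 + (8 * C ^ 3 - 6 * C) <= (1 - 3 / 4 * (1 - (2 * C ^ 2 - 1)) + C) ^ 2.
Proof.
  intros H1 H2.
  assert (E : (1 - 3 / 4 * (1 - (2 * C ^ 2 - 1)) + C) ^ 2 - (2 + (8 * C ^ 3 - 6 * C)) =
              (1 - C) * (- (9 / 4 * C ^ 3 - 11 / 4 * C ^ 2 - 13 / 4 * C + 7 / 4))) by field.
  assert (0 <= (1 - C) * (- (9 / 4 * C ^ 3 - 11 / 4 * C ^ 2 - 13 / 4 * C + 7 / 4)))
    by (apply Rmult_le_pos; nra).
  lra.
Qed.

Section Star.
Variables l m n : nat.
Hypothesis Hl : (1 <= l)%nat.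
Hypothesis Hm : (2 <= m)%nat.
Hypothesis Hnm : n = ((2 * l + 1) * m)%nat.

Let Hn6 : (6 <= n)%nat. Proof. subst n. nia. Qed.
Let Hn : (0 < n)%nat. Proof. lia. Qed.
Let Hn_pos : 0 < INR n. Proof. apply lt_0_INR. exact Hn. Qed.
Let Hl_ge1 : 1 <= INR l. Proof. apply (le_INR 1). exact Hl. Qed.
Let Hm_ge2 : 2 <= INR m. Proof. apply (le_INR 2). exact Hm. Qed.
Let HINR_n : INR n = (2 * INR l + 1) * INR m.
Proof. subst n. rewrite mult_INR, plus_INR, mult_INR. simpl. ring. Qed.

(* Rotating by [l * m] of the [n = (2l+1) m] vertices maps [P_n] onto itself, so
   [p, p + L, ..., p + 2l L] with [L = l m / n] closes up after winding [l] times. *)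
Definition star_arc : R := INR (l * m) / INR n.

Definition star_ratio : R := sqrt (2 - 2 * cos (INR (l * m) * th n)).

Lemma star_arc_eq : star_arc = INR l / (2 * INR l + 1).
Proof. unfold star_arc. rewrite mult_INR, HINR_n. field. lra. Qed.

Lemma star_arc_bounds : 0 < star_arc < 1 / 2.
Proof.
  rewrite star_arc_eq. split; [apply Rdiv_lt_0_compat; lra|].
  apply Rmult_lt_reg_r with (2 * INR l + 1); [lra|].
  unfold Rdiv. rewrite Rmult_assoc, Rinv_l by lra. lra.
Qed.

Lemma star_arc_winding : INR (S (2 * l)) * star_arc = INR l.
Proof. rewrite star_arc_eq, S_INR, mult_INR. simpl. field. lra. Qed.

Lemma INR_n_star_arc : INR n * star_arc = INR (l * m).
Proof. unfold star_arc. field. lra. Qed.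

Lemma m_half_th : INR m * (th n / 2) = PI / (2 * INR l + 1).
Proof. unfold th. rewrite HINR_n. field. lra. Qed.

Lemma star_ratio_sq_eq : 2 - 2 * cos (INR (l * m) * th n) = 2 + 2 * cos (INR m * (th n / 2)).
Proof.
  replace (INR (l * m) * th n) with (PI - INR m * (th n / 2))
    by (unfold th; rewrite mult_INR, HINR_n; field; lra).
  rewrite Rtrigo_facts.cos_pi_minus. ring.
Qed.

Lemma star_ratio_sq_le (k : nat) : (k <= m)%nat ->
  2 - 2 * cos (INR (l * m) * th n) <= 2 + 2 * cos (INR k * (th n / 2)).
Proof.
  intros Hk. rewrite star_ratio_sq_eq. pose proof (th_pos n Hn6). pose proof PI_RGT_0.
  pose proof (pos_INR k). apply le_INR in Hk.
  assert (INR m * (th n / 2) <= PI).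
  { rewrite m_half_th. apply Rmult_le_reg_r with (2 * INR l + 1); [lra|].
    unfold Rdiv. rewrite Rmult_assoc, Rinv_l by lra. nra. }
  assert (cos (INR m * (th n / 2)) <= cos (INR k * (th n / 2))) by (apply cos_decr_1; nra).
  lra.
Qed.

Lemma star_ratio_sq_pos : 0 < 2 - 2 * cos (INR (l * m) * th n).
Proof.
  rewrite star_ratio_sq_eq, m_half_th. pose proof PI_RGT_0.
  assert (0 < PI / (2 * INR l + 1)) by (apply Rdiv_lt_0_compat; lra).
  assert (PI / (2 * INR l + 1) < PI / 2).
  { apply Rmult_lt_reg_r with (2 * (2 * INR l + 1)); [lra|]. unfold Rdiv.
    replace (PI * / (2 * INR l + 1) * (2 * (2 * INR l + 1))) with (2 * PI) by (field; lra).
    replace (PI * / 2 * (2 * (2 * INR l + 1))) with (PI * (2 * INR l + 1)) by (field; lra). nra. }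
  assert (0 < cos (PI / (2 * INR l + 1))) by (apply cos_gt_0; lra).
  lra.
Qed.

Lemma star_ratio_pos : 0 < star_ratio.
Proof. apply sqrt_lt_R0, star_ratio_sq_pos. Qed.

Lemma chord_from_star_arc x : chord_from n x star_arc = star_ratio * sqrt (sqd (pt n x) (0, 0)).
Proof.
  unfold chord_from, chord, star_arc, star_ratio. pose proof star_ratio_sq_pos.
  rewrite INR_IZR_INZ, pt_add_vertices, edist_sqd, sqd_rot_self, <- INR_IZR_INZ by exact Hn.
  apply sqrt_mult; [lra | apply sqd_nonneg].
Qed.

Lemma chord_from_increasing_to_arc x s t : 0 <= s -> s < t -> t <= star_arc ->
  chord_from n x s < chord_from n x t.
Proof.
  intros Hs Hst Ht. destruct (chord_from_edge0 n Hn x) as [x0 [Hx0 HD]].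
  rewrite !HD, !(chord_from_edge0_sqdist n Hn6) by exact Hx0.
  apply sqrt_lt_1_alt. split; [apply sqd_nonneg|].
  assert (INR n * s < INR n * t) by (apply Rmult_lt_compat_l; lra).
  assert (INR n * t <= INR (l * m)) by (rewrite <- INR_n_star_arc; apply Rmult_le_compat_l; lra).
  apply (edge0_sqdist_increasing n Hn6 _ (S (l * m))); [lra | | nra | lra | rewrite S_INR; lra].
  intros j Hj1 Hj2. apply steep_edge_of_small; [exact Hn6 | lra | exact Hj1 | rewrite Hnm; nia].
Qed.

Lemma ratio_le_edge0_sqdist f u (j : Z) b : IZR j <= u <= IZR j + 1 -> 0 <= b ->
  2 - 2 * cos (INR (l * m) * th n) <= b ^ 2 ->
  b <= edist (edge0_point n f) (comb (u - IZR j) (vert n j) (vert n (j + 1))) ->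
  star_ratio <= sqrt (edge0_sqdist n f u).
Proof.
  intros Hu Hb Hb2 Hbe. unfold edge0_sqdist.
  rewrite (pt_on_edge n _ j (u - IZR j)) by (lra || (field; lra)).
  rewrite <- edist_sqd. apply Rle_trans with b; [apply sqrt_le_of_le_sq|]; assumption.
Qed.

Lemma steep_edges_below_ratio_even (N : nat) f u : n = (2 * N)%nat -> 0 <= f < 1 ->
  u <= f + INR N -> sqrt (edge0_sqdist n f u) < star_ratio ->
  (forall j : nat, (1 <= j)%nat -> (j < N)%nat -> steep_edge n f (Z.of_nat j)) /\ u <= INR N.
Proof.
  intros HN Hf Hu Hlt. split.
  - intros j Hj1 Hj2. apply steep_edge_of_small; [exact Hn6 | lra | exact Hj1 | lia].
  - apply Rnot_lt_le. intros HuN.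
    pose proof (cos_half_th_bounds n Hn6). pose proof (star_ratio_sq_le 2 Hm) as H2.
    replace (INR 2 * (th n / 2)) with (th n) in H2 by (simpl; field).
    rewrite (cos_th_half n) in H2.
    assert (star_ratio <= sqrt (edge0_sqdist n f u)); [|lra].
    apply (ratio_le_edge0_sqdist f u (Z.of_nat N) (2 * cos (th n / 2)));
      rewrite <- ?INR_IZR_INZ; [lra | lra | nra |].
    apply edist_opposite_edge_even; assumption.
Qed.

Lemma steep_edges_below_ratio_odd (J : nat) f u : n = (2 * J + 1)%nat -> (3 <= m)%nat ->
  0 <= f < 1 -> f <= u <= f + INR J + 1 / 2 -> sqrt (edge0_sqdist n f u) < star_ratio ->
  exists K : nat, (forall j : nat, (1 <= j)%nat -> (j < K)%nat -> steep_edge n f (Z.of_nat j)) /\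
    u <= INR K.
Proof.
  intros HJ Hm3 Hf Hu Hlt.
  pose proof (cos_half_th_bounds n Hn6) as [HC1 HC2]. pose proof (cos_th_half n) as HcosC.
  pose proof (star_ratio_sq_le 3 Hm3) as H3.
  replace (INR 3 * (th n / 2)) with (3 * (th n / 2)) in H3 by (simpl; ring).
  rewrite (cos_3_half_th n) in H3. set (C := cos (th n / 2)) in *.
  assert (Hsmall : forall j : nat, (1 <= j)%nat -> (j < J)%nat -> steep_edge n f (Z.of_nat j))
    by (intros j Hj1 Hj2; apply steep_edge_of_small; [exact Hn6 | lra | exact Hj1 | lia]).
  assert (Hfar : ~ (INR J + 1 < u /\ u - (INR J + 1) <= 1 / 2)).
  { intros [E1 E2]. assert (star_ratio <= sqrt (edge0_sqdist n f u)); [|lra].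
    apply (ratio_le_edge0_sqdist f u (Z.of_nat J + 1) (C + C ^ 2));
      rewrite ?plus_IZR, <- ?INR_IZR_INZ; simpl (IZR 1);
      [lra | nra | pose proof (poly_bound_far_edge C HC1 HC2); lra |].
    apply edist_far_edge_odd; [exact Hn6 | exact HJ | lra]. }
  destruct (Rle_dec u (INR J)) as [E|E]; [exists J; auto|].
  destruct (Rle_dec (3 / 4) f) as [Ef|Ef].
  - exists (S J). split; [|rewrite S_INR; apply Rnot_lt_le; intros E'; apply Hfar; lra].
    intros j Hj1 Hj2. destruct (Nat.eq_dec j J) as [->|Hne].
    + apply steep_edge_middle_odd; [exact Hn6 | exact HJ | lra].
    + apply Hsmall; lia.
  - exfalso. destruct (Rle_dec u (INR J + 1)) as [E2|E2]; [|apply Hfar; lra].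
    assert (star_ratio <= sqrt (edge0_sqdist n f u)); [|lra].
    apply (ratio_le_edge0_sqdist f u (Z.of_nat J) (1 - 3 / 4 * (1 - cos (th n)) + C));
      rewrite <- ?INR_IZR_INZ, ?HcosC;
      [lra | nra | pose proof (poly_bound_middle_edge C HC1 HC2); lra |].
    rewrite <- HcosC. apply edist_middle_edge_odd; [exact Hn6 | exact HJ | lra].
Qed.

(* The edges opposite to edge 0 are at least [star_ratio] away from it (by projection), so a
   chord from edge 0 shorter than [star_ratio] ends among the steep edges. *)
Lemma edge0_sqdist_increasing_below_ratio f t : 0 <= f < 1 -> 0 < t <= 1 / 2 ->
  sqrt (edge0_sqdist n f (f + INR n * t)) < star_ratio ->
  forall s, 0 <= s < t -> edge0_sqdist n f (f + INR n * s) < edge0_sqdist n f (f + INR n * t).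
Proof.
  intros Hf Ht Hlt s Hs.
  assert (INR n * s < INR n * t) by (apply Rmult_lt_compat_l; lra).
  assert (0 <= INR n * s) by nra. assert (INR n * t <= INR n / 2) by nra.
  assert (Hinc : forall K : nat,
     (forall j : nat, (1 <= j)%nat -> (j < K)%nat -> steep_edge n f (Z.of_nat j)) ->
     f + INR n * t <= INR K -> edge0_sqdist n f (f + INR n * s) < edge0_sqdist n f (f + INR n * t))
    by (intros K HK HuK; apply (edge0_sqdist_increasing n Hn6 f K); auto; lra).
  destruct (Nat.Even_or_Odd m) as [[q Hq]|[q Hq]].
  - assert (HN : n = (2 * ((2 * l + 1) * q))%nat) by lia.
    assert (INR n = 2 * INR ((2 * l + 1) * q)) by (rewrite HN, mult_INR; reflexivity).
    destruct (steep_edges_below_ratio_even _ f (f + INR n * t) HN Hf ltac:(lra) Hlt) as [HK HuK].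
    exact (Hinc _ HK HuK).
  - assert (HJ : n = (2 * ((2 * l + 1) * q + l) + 1)%nat) by lia.
    assert (INR n = 2 * INR ((2 * l + 1) * q + l) + 1)
      by (rewrite HJ, plus_INR, mult_INR; reflexivity).
    destruct (steep_edges_below_ratio_odd _ f (f + INR n * t) HJ ltac:(lia) Hf ltac:(lra) Hlt)
      as [K [HK HuK]].
    exact (Hinc _ HK HuK).
Qed.

Lemma chord_from_increasing_below_ratio x t : 0 < t <= 1 / 2 -> chord_from n x t < star_ratio ->
  forall s, 0 <= s < t -> chord_from n x s < chord_from n x t.
Proof.
  intros Ht Hlt s Hs. destruct (chord_from_edge0 n Hn x) as [x0 [Hx0 HD]].
  rewrite !HD, !(chord_from_edge0_sqdist n Hn6) in * by exact Hx0.
  apply sqrt_lt_1_alt. split; [apply sqd_nonneg|].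
  apply edge0_sqdist_increasing_below_ratio; assumption.
Qed.

(* Along an arrow the chord from its tail increases, and by reflection so does the chord
   to its head. *)
Lemma cyclicVR_below_ratio r : 0 < r < star_ratio -> cyclicVR n r.
Proof.
  intros Hr u0 u1 Hu0 Hu1 Harr w Hw Hsw.
  destruct (arrow_dP n Hn r u0 u1 Hu0 Hu1 Harr) as [Ht Hd].
  set (t := dP u0 u1) in *. set (sw := dP u0 w) in *.
  assert (Hd' : chord_from n u0 t < star_ratio) by lra.
  assert (Hne0 : u0 <> w) by (intros E; subst w; unfold sw in Hsw; rewrite dP_self in Hsw; lra).
  assert (Hne1 : w <> u1) by (intros E; subst w; unfold sw, t in *; lra).
  destruct (dP_lift u0 w) as [kw Hkw], (dP_lift u0 u1) as [k1 Hk1]. fold sw t in Hkw, Hk1.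
  assert (Hwu1 : dP w u1 = t - sw) by (apply (dP_of_lift _ _ _ (k1 - kw)); rewrite ?minus_IZR; lra).
  split; split; auto; split.
  - change (chord n u0 w < r). rewrite chord_lift by exact Hn. fold sw.
    pose proof (chord_from_increasing_below_ratio u0 t ltac:(lra) Hd' sw ltac:(lra)). lra.
  - rewrite (dP_swap u0 w) by auto. fold sw. lra.
  - change (chord n w u1 < r). rewrite chord_lift, Hwu1 by exact Hn.
    clearbody sw t. subst w. rewrite chord_from_add_IZR by exact Hn.
    replace (u0 + sw) with (u0 + t - (t - sw)) by ring. rewrite <- chord_from_opp by exact Hn.
    assert (Hrefl : chord_from n (- (u0 + t)) t = chord_from n u0 t)
      by (rewrite chord_from_opp by exact Hn; f_equal; ring).
    pose proof (chord_from_increasing_below_ratio (- (u0 + t)) t ltac:(lra) ltac:(lra)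
                  (t - sw) ltac:(lra)).
    lra.
  - rewrite (dP_swap w u1), Hwu1 by auto. lra.
Qed.

Lemma rn_bounds : star_ratio <= rn n <= chord n (/ (2 * INR n)) (antipode_of_mid n) /\
  forall r, 0 < r < rn n -> cyclicVR n r.
Proof.
  apply (threshold_bounds (cyclicVR n) _ _ (chord n (/ INR n) (antipode_of_mid n))).
  - exact star_ratio_pos.
  - split; [apply edist_nonneg | apply chord_mid_lt_chord_vert1; exact Hn6].
  - intros r Hr. apply cyclicVR_below_ratio, Hr.
  - apply not_cyclicVR_between. exact Hn6.
Qed.

Lemma rn_pos : 0 < rn n.
Proof. pose proof rn_bounds. pose proof star_ratio_pos. lra. Qed.

Lemma off0_spec r x : 0 < r < rn n ->
  0 < off0 n r x <= 1 / 2 /\ chord_from n x (off0 n r x) = r /\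
  (forall s, 0 <= s < off0 n r x -> chord_from n x s < r) /\
  (forall t, 0 < t < 1 -> chord_from n x t = r -> off0 n r x <= t).
Proof.
  intros Hr. destruct rn_bounds as [[_ Hrn] Hcyc].
  destruct (exists_chord_ge_mid n Hn6 x) as [y Hy].
  destruct (cyclicVR_exists_chord_from_ge n Hn r x y (Hcyc r Hr) ltac:(lra)) as [t0 [Ht0 Hge]].
  assert (Hhit : exists t1, 0 < t1 <= 1 / 2 /\ chord_from n x t1 = r).
  { destruct (Rle_lt_or_eq_dec r (chord_from n x t0) Hge) as [Hgt|Heq]; [|exists t0; auto].
    destruct (ivt_strict (chord_from n x) 0 t0 r (chord_from_continuous n Hn x))
      as [t1 [Ht1 Hft1]]; [lra | rewrite chord_from_0 by exact Hn; lra | exact Hgt |].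
    exists t1. split; [lra | exact Hft1]. }
  destruct Hhit as [t1 [Ht1 Hft1]].
  change (off0 n r x) with (real (Glb_Rbar (fun t => 0 < t < 1 /\ chord_from n x t = r))).
  destruct (first_hit (chord_from n x) r t1 (chord_from_continuous n Hn x) (chord_from_0 n Hn x)
    ltac:(lra) ltac:(lra) Hft1) as [Hg [Hfg [Hb Hmin]]].
  split; [lra | auto].
Qed.

Lemma off0_lt_of r x t : 0 < r < rn n -> 0 < t < 1 -> r < chord_from n x t -> off0 n r x < t.
Proof.
  intros Hr Ht Hp. destruct (off0_spec r x Hr) as [_ [_ [_ Hmin]]].
  destruct (ivt_strict (chord_from n x) 0 t r (chord_from_continuous n Hn x))
    as [t' [Ht' Hpt]]; [lra | rewrite chord_from_0 by exact Hn; lra | exact Hp |].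
  pose proof (Hmin t' ltac:(lra) Hpt). lra.
Qed.

Lemma off0_gt_of r x t : 0 < r < rn n -> 0 < t ->
  (forall s, 0 < s <= t -> chord_from n x s < r) -> t < off0 n r x.
Proof.
  intros Hr Ht Hs. destruct (off0_spec r x Hr) as [Hpos [Hhit _]].
  apply Rnot_le_lt. intros Hle. pose proof (Hs (off0 n r x) ltac:(lra)). lra.
Qed.

Lemma off0_increasing r1 r2 x : 0 < r1 -> r1 < r2 -> r2 < rn n -> off0 n r1 x < off0 n r2 x.
Proof.
  intros H1 H2 H3. destruct (off0_spec r2 x ltac:(lra)) as [Hpos [Hhit _]].
  apply off0_lt_of; lra.
Qed.

(* The cyclic order is preserved by [x |-> x + off0 r x]: otherwise [y] would lie strictly
   inside the arrow from [x] to [g_r(y)], forcing [|y - g_r(y)| < r]. *)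
Lemma off0_monotone r x y : 0 < r < rn n -> x <= y -> x + off0 n r x <= y + off0 n r y.
Proof.
  intros Hr Hxy. destruct (off0_spec r x Hr) as [Hx [_ [Hbx _]]].
  destruct (off0_spec r y Hr) as [Hy [Hhy _]].
  apply Rnot_lt_le. intros Hlt.
  assert (Hxy' : x < y) by (destruct (Req_dec x y) as [->|]; lra).
  destruct (Rlt_le_dec y (x + off0 n r x)) as [Hyx|]; [|lra].
  pose proof (cyclicVR_between n Hn r x y (y + off0 n r y) (proj2 rn_bounds r Hr)
    ltac:(lra) ltac:(lra)) as Hbetween.
  assert (Hxz : chord n x (y + off0 n r y) < r).
  { replace (y + off0 n r y) with (x + (y + off0 n r y - x)) by ring. apply Hbx. lra. }
  specialize (Hbetween Hxz). unfold chord_from in Hhy. lra.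
Qed.

Definition star_chord (x : R) : R := chord_from n x star_arc.

Lemma star_chord_eq x :
  star_chord x = star_ratio * sqrt (1 - 2 * edge_weight (INR n * x) * (1 - cos (th n))).
Proof. unfold star_chord. rewrite chord_from_star_arc, sqd_pt_origin by exact Hn. reflexivity. Qed.

Lemma star_chord_bounds x : 0 < star_chord x <= star_ratio.
Proof.
  rewrite star_chord_eq. pose proof star_ratio_pos. pose proof (cos_th_bounds n Hn6).
  pose proof (edge_weight_bounds (INR n * x)).
  assert (0 <= edge_weight (INR n * x) * (1 - cos (th n)) <= 1 / 4) by (split; nra).
  split.
  - apply Rmult_lt_0_compat; [lra | apply sqrt_lt_R0; lra].
  - rewrite <- (Rmult_1_r star_ratio) at 2. apply Rmult_le_compat_l; [lra|].
    apply sqrt_le_of_le_sq; lra.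
Qed.

Lemma star_chord_le_rn x : star_chord x <= rn n.
Proof. pose proof (star_chord_bounds x). pose proof rn_bounds. lra. Qed.

Lemma star_chord_add_IZR x k : star_chord (x + IZR k) = star_chord x.
Proof.
  rewrite !star_chord_eq. replace (INR n * (x + IZR k)) with (INR n * x + IZR (Z.of_nat n * k))
    by (rewrite mult_IZR, <- INR_IZR_INZ; ring).
  rewrite edge_weight_add_IZR. reflexivity.
Qed.

Lemma star_chord_add_arc x i : star_chord (x + INR i * star_arc) = star_chord x.
Proof.
  rewrite !star_chord_eq.
  replace (INR n * (x + INR i * star_arc)) with (INR n * x + IZR (Z.of_nat (i * (l * m))))
    by (rewrite <- INR_IZR_INZ, mult_INR, <- INR_n_star_arc; ring).
  rewrite edge_weight_add_IZR. reflexivity.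
Qed.

Lemma off0_star_chord x : star_chord x < rn n -> off0 n (star_chord x) x = star_arc.
Proof.
  intros Hr. pose proof (star_chord_bounds x). pose proof star_arc_bounds.
  destruct (off0_spec (star_chord x) x ltac:(lra)) as [Hpos [Hhit [_ Hmin]]].
  apply Rle_antisym; [apply Hmin; [lra | reflexivity]|].
  apply Rnot_lt_le. intros Hlt.
  pose proof (chord_from_increasing_to_arc x (off0 n (star_chord x) x) star_arc ltac:(lra) Hlt
    ltac:(lra)) as Hinc.
  fold (star_chord x) in Hinc. lra.
Qed.

Lemma off0_lt_star_arc r x : 0 < r < star_chord x -> off0 n r x < star_arc.
Proof.
  intros Hr. pose proof (star_chord_le_rn x). pose proof star_arc_bounds.
  apply off0_lt_of; [lra | lra | exact (proj2 Hr)].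
Qed.

Lemma off0_gt_star_arc r x : star_chord x < r < rn n -> star_arc < off0 n r x.
Proof.
  intros Hr. pose proof (star_chord_bounds x). pose proof star_arc_bounds.
  apply off0_gt_of; [lra | lra|]. intros s Hs.
  destruct (Rle_lt_or_eq_dec s star_arc ltac:(lra)) as [E| ->]; [|apply Hr].
  pose proof (chord_from_increasing_to_arc x s star_arc ltac:(lra) E ltac:(lra)) as Hinc.
  fold (star_chord x) in Hinc. lra.
Qed.

Lemma off_lt_rn r x : r < rn n -> off n r x = off0 n r x.
Proof. intros H. unfold off. destruct (Rlt_dec r (rn n)); [reflexivity | contradiction]. Qed.

Lemma off_rn_sup x :
  (forall r, 0 < r < rn n -> off0 n r x <= off n (rn n) x) /\
  (forall eps, 0 < eps -> exists r, 0 < r < rn n /\ off n (rn n) x - eps < off0 n r x) /\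
  off n (rn n) x = real (Lub_Rbar (fun v => exists r, 0 < r < rn n /\ v = off0 n r x)).
Proof.
  destruct (increasing_at_left_sup (fun r => off0 n r x) (rn n) (1 / 2) rn_pos
    (fun r1 r2 => off0_increasing r1 r2 x)
    (fun r Hr => proj2 (proj1 (off0_spec r x Hr)))) as [Hlim Hsup].
  set (L := real (Lub_Rbar _)) in *.
  assert (HL : off n (rn n) x = L).
  { unfold off. destruct (Rlt_dec (rn n) (rn n)) as [E|_]; [lra|].
    pose proof (epsilon_spec (inhabits 0)
      (fun L => filterlim (fun r' => off0 n r' x) (at_left (rn n)) (locally L))
      (ex_intro _ L Hlim)) as Heps. cbv beta in Heps.
    apply (@filterlim_locally_unique R R_AbsRing R_NormedModule (at_left (rn n))
      (Proper_StrongProper _ (at_left_proper_filter (rn n))) (fun r' => off0 n r' x) _ _ Heps Hlim). }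
  rewrite HL. split; [apply Hsup | split; [apply Hsup | reflexivity]].
Qed.

Lemma off_add_IZR r x k : 0 < r <= rn n -> off n r (x + IZR k) = off n r x.
Proof.
  intros Hr. destruct (Rlt_le_dec r (rn n)) as [E|E].
  - rewrite !off_lt_rn by exact E. apply off0_add_IZR. exact Hn.
  - replace r with (rn n) by lra.
    rewrite (proj2 (proj2 (off_rn_sup (x + IZR k)))), (proj2 (proj2 (off_rn_sup x))).
    f_equal. apply Lub_Rbar_eqset. intros v.
    split; intros [r' [Hr' Hv]]; exists r'; split; auto;
      rewrite Hv, off0_add_IZR by exact Hn; reflexivity.
Qed.

Lemma off_bounds r x : 0 < r <= rn n -> 0 < off n r x <= 1 / 2.
Proof.
  intros Hr. destruct (Rlt_le_dec r (rn n)) as [E|E].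
  - rewrite off_lt_rn by exact E. apply (off0_spec r x). lra.
  - replace r with (rn n) by lra. pose proof rn_pos.
    destruct (off_rn_sup x) as [Hle [Happ _]].
    pose proof (Hle (rn n / 2) ltac:(lra)). pose proof (proj1 (off0_spec (rn n / 2) x ltac:(lra))).
    split; [lra|]. apply Rnot_lt_le. intros Hgt.
    destruct (Happ (off n (rn n) x - 1 / 2) ltac:(lra)) as [r' [Hr' Hlt]].
    pose proof (proj1 (off0_spec r' x Hr')). lra.
Qed.

Lemma off_monotone r x y : 0 < r <= rn n -> x <= y -> x + off n r x <= y + off n r y.
Proof.
  intros Hr Hxy. destruct (Rlt_le_dec r (rn n)) as [E|E].
  - rewrite !off_lt_rn by exact E. apply off0_monotone; [lra | exact Hxy].
  - replace r with (rn n) by lra. apply Rnot_lt_le. intros Hlt.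
    destruct (off_rn_sup x) as [_ [Happ _]]. destruct (off_rn_sup y) as [Hle _].
    destruct (Happ (x + off n (rn n) x - (y + off n (rn n) y)) ltac:(lra)) as [r' [Hr' Hlt']].
    pose proof (off0_monotone r' x y Hr' Hxy). pose proof (Hle r' Hr'). lra.
Qed.

Lemma off_star_chord x : off n (star_chord x) x = star_arc.
Proof.
  pose proof (star_chord_le_rn x) as Hle. pose proof (star_chord_bounds x). pose proof star_arc_bounds.
  destruct Hle as [Hlt|Heq]; [rewrite off_lt_rn, off0_star_chord by exact Hlt; reflexivity|].
  rewrite Heq. destruct (off_rn_sup x) as [Hsup [Happ _]].
  apply Rle_antisym; apply Rnot_lt_le; intros Hlt.
  - destruct (Happ (off n (rn n) x - star_arc) ltac:(lra)) as [r [Hr Hr']].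
    pose proof (off0_lt_star_arc r x ltac:(lra)). lra.
  - set (t := Rmax (off n (rn n) x) (star_arc / 2)).
    assert (Ht : star_arc / 2 <= t < star_arc)
      by (unfold t; split; [apply Rmax_r | apply Rmax_lub_lt; lra]).
    pose proof (chord_from_increasing_to_arc x t star_arc ltac:(lra) ltac:(lra) ltac:(lra)) as Hinc.
    fold (star_chord x) in Hinc. pose proof (edist_nonneg (pt n x) (pt n (x + t))).
    set (r := (chord_from n x t + rn n) / 2).
    assert (Hr : 0 < r < rn n) by (unfold r, chord_from, chord in *; lra).
    assert (t < off0 n r x).
    { apply off0_gt_of; [exact Hr | lra|]. intros s Hs.
      destruct (Rle_lt_or_eq_dec s t ltac:(lra)) as [E| ->]; [|unfold r; lra].
      pose proof (chord_from_increasing_to_arc x s t ltac:(lra) E ltac:(lra)). unfold r. lra. }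
    assert (off n (rn n) x <= t) by apply Rmax_l. pose proof (Hsup r Hr). lra.
Qed.

Lemma off_gt_star_arc r x : star_chord x < r <= rn n -> star_arc < off n r x.
Proof.
  intros Hr. destruct (Rlt_le_dec r (rn n)) as [E|E].
  - rewrite off_lt_rn by exact E. apply off0_gt_star_arc. lra.
  - replace r with (rn n) by lra. destruct (off_rn_sup x) as [Hsup _].
    set (r' := (star_chord x + rn n) / 2). pose proof (star_chord_bounds x).
    pose proof (off0_gt_star_arc r' x ltac:(unfold r'; lra)).
    pose proof (Hsup r' ltac:(unfold r'; lra)).
    lra.
Qed.

Lemma off_lt_star_arc r x : 0 < r < star_chord x -> off n r x < star_arc.
Proof.
  intros Hr. pose proof (star_chord_le_rn x).
  rewrite off_lt_rn by lra. apply off0_lt_star_arc, Hr.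
Qed.

Definition star_point (p : R) (i : nat) : R := frac_part (p + INR i * star_arc).

Lemma star_point_lift p i : exists k, star_point p i = p + INR i * star_arc + IZR k.
Proof.
  unfold star_point. destruct (frac_part_int_offset (p + INR i * star_arc)) as [k Hk].
  exists (- k)%Z. rewrite opp_IZR. lra.
Qed.

Lemma star_point_0 p : inP p -> star_point p 0 = p.
Proof. intros Hp. unfold star_point. simpl. rewrite Rmult_0_l, Rplus_0_r. apply frac_part_id, Hp. Qed.

Lemma g_star_point p i : g n (star_chord p) (star_point p i) = star_point p (S i).
Proof.
  destruct (star_point_lift p i) as [k Hk]. unfold g. rewrite Hk.
  rewrite <- (star_chord_add_arc p i), <- (star_chord_add_IZR (p + INR i * star_arc) k) at 1.
  rewrite off_star_chord. unfold star_point. rewrite S_INR.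
  replace (p + INR i * star_arc + IZR k + star_arc) with (p + (INR i + 1) * star_arc + IZR k) by ring.
  apply frac_part_add_IZR.
Qed.

Lemma dP_star_point p i : dP (star_point p i) (star_point p (S i)) = star_arc.
Proof.
  unfold star_point. rewrite dP_frac, S_INR.
  replace (p + (INR i + 1) * star_arc - (p + INR i * star_arc)) with star_arc by ring.
  apply frac_part_id. pose proof star_arc_bounds. lra.
Qed.

Lemma is_star_star_point p : inP p -> is_star n l (star_chord p) (star_point p).
Proof.
  intros Hp. split; [|split].
  - intros i _. symmetry. apply g_star_point.
  - rewrite (star_point_0 p Hp). unfold star_point. replace (2 * l + 1)%nat with (S (2 * l)) by lia.
    rewrite star_arc_winding, INR_IZR_INZ, frac_part_add_IZR. apply frac_part_id, Hp.
  - rewrite (sum_eq _ (fun _ => star_arc)) by (intros; apply dP_star_point).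
    rewrite sum_cte, Rmult_comm. apply star_arc_winding.
Qed.

Fixpoint lifted_orbit (r p : R) (i : nat) : R :=
  match i with O => p | S j => lifted_orbit r p j + off n r (lifted_orbit r p j) end.

Lemma lifted_orbit_sum r p N :
  lifted_orbit r p (S N) = p + sum_f_R0 (fun j => off n r (lifted_orbit r p j)) N.
Proof.
  induction N as [|N IH]; [reflexivity|].
  change (lifted_orbit r p (S (S N))) with (lifted_orbit r p (S N) + off n r (lifted_orbit r p (S N))).
  rewrite tech5, <- Rplus_assoc, <- IH. reflexivity.
Qed.

Lemma star_eq_frac_orbit r p u : 0 < r <= rn n -> inP p -> u 0%nat = p -> is_star n l r u ->
  forall i, (i <= 2 * l + 1)%nat -> u i = frac_part (lifted_orbit r p i).
Proof.
  intros Hr Hp Hu0 [Hs _]. induction i as [|i IH]; intros Hi.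
  - simpl. rewrite Hu0. symmetry. apply frac_part_id, Hp.
  - rewrite Hs, IH by lia. unfold g. simpl.
    destruct (frac_part_int_offset (lifted_orbit r p i)) as [k Hk].
    replace (frac_part (lifted_orbit r p i)) with (lifted_orbit r p i + IZR (- k))
      by (rewrite opp_IZR; lra).
    rewrite off_add_IZR by exact Hr.
    replace (lifted_orbit r p i + IZR (- k) + off n r (lifted_orbit r p i))
      with (lifted_orbit r p i + off n r (lifted_orbit r p i) + IZR (- k)) by ring.
    apply frac_part_add_IZR.
Qed.

Lemma star_orbit_end r p u : 0 < r <= rn n -> inP p -> u 0%nat = p -> is_star n l r u ->
  lifted_orbit r p (S (2 * l)) = p + INR l.
Proof.
  intros Hr Hp Hu0 Hu. rewrite lifted_orbit_sum. f_equal.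
  destruct Hu as [Hs [Hclose Hsum]]. rewrite <- Hsum. apply sum_eq. intros i Hi.
  rewrite !(star_eq_frac_orbit r p u Hr Hp Hu0 (conj Hs (conj Hclose Hsum))) by lia.
  rewrite dP_frac. simpl.
  replace (lifted_orbit r p i + off n r (lifted_orbit r p i) - lifted_orbit r p i)
    with (off n r (lifted_orbit r p i)) by ring.
  symmetry. apply frac_part_id. pose proof (off_bounds r (lifted_orbit r p i) Hr). lra.
Qed.

Lemma lifted_orbit_lt r p : 0 < r < star_chord p ->
  forall i, lifted_orbit r p (S i) < p + INR (S i) * star_arc.
Proof.
  intros Hr. assert (Hrn : 0 < r <= rn n) by (pose proof (star_chord_le_rn p); lra).
  assert (Hstep : forall i, lifted_orbit r p i <= p + INR i * star_arc ->
                            lifted_orbit r p (S i) < p + INR (S i) * star_arc).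
  { intros i Hi. simpl lifted_orbit. rewrite S_INR.
    pose proof (off_monotone r _ _ Hrn Hi).
    pose proof (off_lt_star_arc r (p + INR i * star_arc)) as Hlt.
    rewrite star_chord_add_arc in Hlt. specialize (Hlt Hr). lra. }
  induction i as [|i IH]; apply Hstep; [simpl; lra | lra].
Qed.

Lemma lifted_orbit_gt r p : star_chord p < r <= rn n ->
  forall i, p + INR (S i) * star_arc < lifted_orbit r p (S i).
Proof.
  intros Hr. assert (Hrn : 0 < r <= rn n) by (pose proof (star_chord_bounds p); lra).
  assert (Hstep : forall i, p + INR i * star_arc <= lifted_orbit r p i ->
                            p + INR (S i) * star_arc < lifted_orbit r p (S i)).
  { intros i Hi. simpl lifted_orbit. rewrite S_INR.
    pose proof (off_monotone r _ _ Hrn Hi).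
    pose proof (off_gt_star_arc r (p + INR i * star_arc)) as Hgt.
    rewrite star_chord_add_arc in Hgt. specialize (Hgt Hr). lra. }
  induction i as [|i IH]; apply Hstep; [simpl; lra | lra].
Qed.

Lemma star_side_unique r p : inP p -> star_side n l r p -> r = star_chord p.
Proof.
  intros Hp [Hr [u [Hu0 Hu]]].
  pose proof (star_orbit_end r p u Hr Hp Hu0 Hu) as Hend. pose proof star_arc_winding.
  destruct (Rtotal_order r (star_chord p)) as [E|[E|E]]; [exfalso | exact E | exfalso].
  - pose proof (lifted_orbit_lt r p ltac:(lra) (2 * l)). lra.
  - pose proof (lifted_orbit_gt r p ltac:(lra) (2 * l)). lra.
Qed.

Lemma s_eq_star_chord p : inP p -> s n l p = star_chord p.
Proof.
  intros Hp. apply star_side_unique; [exact Hp|]. unfold s. apply epsilon_spec.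
  exists (star_chord p). split; [split; [apply star_chord_bounds | apply star_chord_le_rn]|].
  exists (star_point p). split; [apply star_point_0, Hp | apply is_star_star_point, Hp].
Qed.

Lemma star_eq_star_point p u : inP p -> u 0%nat = p -> is_star n l (s n l p) u ->
  forall i, (i <= 2 * l + 1)%nat -> u i = star_point p i.
Proof.
  intros Hp Hu0 [Hs _]. rewrite s_eq_star_chord in Hs by exact Hp.
  induction i as [|i IH]; intros Hi.
  - rewrite Hu0, star_point_0 by exact Hp. reflexivity.
  - rewrite Hs, IH by lia. apply g_star_point.
Qed.

Lemma star_meets_iff c p : 0 <= c < 1 -> inP p ->
  (exists u, u 0%nat = p /\ is_star n l (s n l p) u /\
     exists i k, (i <= 2 * l)%nat /\ u i = (IZR k + c) / INR n) <->
  frac_part (INR n * p) = c.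
Proof.
  intros Hc Hp. rewrite frac_part_eq_iff by exact Hc. split.
  - intros [u [Hu0 [Hu [i [k [Hi Hk]]]]]].
    rewrite (star_eq_star_point p u Hp Hu0 Hu i ltac:(lia)) in Hk.
    destruct (star_point_lift p i) as [k' Hk']. rewrite Hk' in Hk.
    exists (k - Z.of_nat (i * (l * m)) - Z.of_nat n * k')%Z.
    rewrite !minus_IZR, mult_IZR, <- !INR_IZR_INZ, mult_INR, <- INR_n_star_arc.
    apply (f_equal (Rmult (INR n))) in Hk.
    replace (INR n * ((IZR k + c) / INR n)) with (IZR k + c) in Hk by (field; lra).
    replace (IZR k) with (INR n * (p + INR i * star_arc + IZR k') - c) by lra. ring.
  - intros [k Hk]. exists (star_point p). split; [apply star_point_0, Hp|].
    rewrite s_eq_star_chord by exact Hp. split; [apply is_star_star_point, Hp|].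
    exists 0%nat, k. split; [lia|]. rewrite star_point_0, <- Hk by exact Hp. field. lra.
Qed.

Lemma vcross_iff p : inP p -> vcross n l p <-> frac_part (INR n * p) = 0.
Proof.
  intros Hp. rewrite <- (star_meets_iff 0 p) by (lra || exact Hp). unfold vcross.
  split; intros [u [Hu0 [Hu [i [k [Hi Hk]]]]]]; exists u; split; auto; split; auto;
    exists i, k; split; auto; rewrite Hk; f_equal; ring.
Qed.

Lemma mcross_iff p : inP p -> mcross n l p <-> frac_part (INR n * p) = / 2.
Proof. intros Hp. apply star_meets_iff; [lra | exact Hp]. Qed.

Lemma s_lt_of_edge_weight_lt p q : inP p -> inP q ->
  edge_weight (INR n * q) < edge_weight (INR n * p) -> s n l p < s n l q.
Proof.
  intros Hp Hq H. rewrite !s_eq_star_chord, !star_chord_eq by assumption.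
  pose proof star_ratio_pos. pose proof (cos_th_bounds n Hn6).
  pose proof (edge_weight_bounds (INR n * p)).
  assert (edge_weight (INR n * q) * (1 - cos (th n)) < edge_weight (INR n * p) * (1 - cos (th n)))
    by (apply Rmult_lt_compat_r; lra).
  assert (edge_weight (INR n * p) * (1 - cos (th n)) <= 1 / 4) by nra.
  apply Rmult_lt_compat_l; [lra|]. apply sqrt_lt_1_alt. lra.
Qed.

Lemma s_le_of_edge_weight_le p q : inP p -> inP q ->
  edge_weight (INR n * q) <= edge_weight (INR n * p) -> s n l p <= s n l q.
Proof.
  intros Hp Hq [H|H]; [apply Rlt_le, s_lt_of_edge_weight_lt; assumption|].
  rewrite !s_eq_star_chord, !star_chord_eq, H by assumption. lra.
Qed.

Lemma mcross_is_min p : inP p -> mcross n l p -> forall q, inP q -> s n l p <= s n l q.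
Proof.
  intros Hp Hm' q Hq. rewrite mcross_iff in Hm' by exact Hp.
  apply s_le_of_edge_weight_le; [exact Hp | exact Hq|].
  pose proof (edge_weight_bounds (INR n * q)). unfold edge_weight at 2. rewrite Hm'. lra.
Qed.

Lemma vcross_is_max p : inP p -> vcross n l p -> forall q, inP q -> s n l q <= s n l p.
Proof.
  intros Hp Hv q Hq. rewrite vcross_iff in Hv by exact Hp.
  apply s_le_of_edge_weight_le; [exact Hq | exact Hp|].
  pose proof (edge_weight_bounds (INR n * q)). unfold edge_weight at 1. rewrite Hv. lra.
Qed.

Lemma not_vcross_and_mcross p : inP p -> ~ (vcross n l p /\ mcross n l p).
Proof.
  intros Hp [Hv Hm']. rewrite vcross_iff in Hv by exact Hp. rewrite mcross_iff in Hm' by exact Hp. lra.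
Qed.

Lemma crossing_gap c p q : 0 <= c < 1 -> inP p -> inP q -> p <> q ->
  frac_part (INR n * p) = c -> frac_part (INR n * q) = c ->
  exists x, inP x /\ frac_part (INR n * x) = frac_part (c + / 2) /\ 0 < dP p x < dP p q.
Proof.
  intros Hc Hp Hq Hpq Hfp Hfq. destruct (half_edge_step n Hn p Hp) as [Hx [Hdx Hfx]].
  eexists. split; [exact Hx|]. rewrite Hfx, Hfp. split; [reflexivity|]. rewrite Hdx.
  pose proof (dP_ge_of_same_frac n Hn p q Hp Hq Hpq ltac:(congruence)).
  split; [apply Rinv_0_lt_compat; lra|]. apply Rlt_le_trans with (/ INR n); [|assumption].
  apply Rinv_lt_contravar; nra.
Qed.

Lemma vcross_gap p q : inP p -> inP q -> vcross n l p -> vcross n l q -> p <> q ->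
  exists x, inP x /\ mcross n l x /\ 0 < dP p x < dP p q.
Proof.
  intros Hp Hq Hvp Hvq Hpq. rewrite vcross_iff in Hvp, Hvq by assumption.
  destruct (crossing_gap 0 p q ltac:(lra) Hp Hq Hpq Hvp Hvq) as [x [Hx [Hfx Hd]]].
  exists x. rewrite mcross_iff, Hfx, Rplus_0_l by exact Hx.
  split; [exact Hx | split; [apply frac_part_id; lra | exact Hd]].
Qed.

Lemma mcross_gap p q : inP p -> inP q -> mcross n l p -> mcross n l q -> p <> q ->
  exists x, inP x /\ vcross n l x /\ 0 < dP p x < dP p q.
Proof.
  intros Hp Hq Hmp Hmq Hpq. rewrite mcross_iff in Hmp, Hmq by assumption.
  destruct (crossing_gap (/ 2) p q ltac:(lra) Hp Hq Hpq Hmp Hmq) as [x [Hx [Hfx Hd]]].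
  exists x. rewrite vcross_iff, Hfx by exact Hx.
  split; [exact Hx | split; [apply (frac_part_of_decomp _ 1); simpl; lra | exact Hd]].
Qed.

Lemma s_strictly_monotone_between a b : inP a -> inP b ->
  ((mcross n l a /\ vcross n l b) \/ (vcross n l a /\ mcross n l b)) ->
  (forall x, inP x -> 0 < dP a x < dP a b -> ~ crossing n l x) ->
  (forall x y, inP x -> inP y -> dP a x < dP a y -> dP a y <= dP a b -> s n l x < s n l y) \/
  (forall x y, inP x -> inP y -> dP a x < dP a y -> dP a y <= dP a b -> s n l y < s n l x).
Proof.
  intros Ha Hb Htypes Hnone.
  rewrite !vcross_iff, !mcross_iff in Htypes by assumption.
  assert (Hb' : frac_part (INR n * b) = frac_part (frac_part (INR n * a) + / 2)).
  { destruct Htypes as [[-> ->]|[-> ->]].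
    - symmetry. apply (frac_part_of_decomp _ 1); simpl; lra.
    - rewrite Rplus_0_l. symmetry. apply frac_part_id. lra. }
  assert (Hhalf : INR n * dP a b = / 2).
  { apply (dP_adjacent_half n Hn a b Ha Hb Hb'). intros x Hx Hdx Heq. apply (Hnone x Hx Hdx).
    unfold crossing. rewrite vcross_iff, mcross_iff by exact Hx. rewrite <- Hb' in Heq.
    destruct Htypes as [[_ H]|[_ H]]; rewrite H in Heq; [left | right]; exact Heq. }
  assert (Ht : forall x, dP a x <= dP a b -> 0 <= INR n * dP a x <= / 2).
  { intros x Hxb. pose proof (dP_bounds a x).
    split; [apply Rmult_le_pos; lra | rewrite <- Hhalf; apply Rmult_le_compat_l; lra]. }
  assert (Hlt : forall x y, dP a x < dP a y -> INR n * dP a x < INR n * dP a y)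
    by (intros x y Hxy; apply Rmult_lt_compat_l; lra).
  pose proof (Rplus_Int_part_frac_part (INR n * a)) as HnA.
  destruct Htypes as [[Hfa _]|[Hfa _]]; [left | right]; intros x y Hx Hy Hxy Hyb;
    apply s_lt_of_edge_weight_lt; try assumption;
    rewrite !(edge_weight_n_dP n a), HnA, Hfa;
    pose proof (Hlt x y Hxy); pose proof (Ht x ltac:(lra)); pose proof (Ht y Hyb).
  - apply (edge_weight_decreasing _ _ (Int_part (INR n * a))); lra.
  - apply (edge_weight_increasing _ _ (Int_part (INR n * a))); lra.
Qed.

End Star.

Theorem lemma5p11 (l n : nat) :
  (1 <= l)%nat -> (4 * l + 2 <= n)%nat -> Nat.divide (2 * l + 1) n ->
  (* midpoint crossings are global minima of s_{2l+1} *)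
  (forall p, inP p -> mcross n l p -> forall q, inP q -> s n l p <= s n l q) /\
  (* vertex crossings are global maxima of s_{2l+1} *)
  (forall p, inP p -> vcross n l p -> forall q, inP q -> s n l q <= s n l p) /\
  (* crossings alternate between vertex and midpoint crossings *)
  ((forall p, inP p -> ~ (vcross n l p /\ mcross n l p)) /\
   (forall p q, inP p -> inP q -> vcross n l p -> vcross n l q -> p <> q ->
      exists m, inP m /\ mcross n l m /\ 0 < dP p m < dP p q) /\
   (forall p q, inP p -> inP q -> mcross n l p -> mcross n l q -> p <> q ->
      exists v, inP v /\ vcross n l v /\ 0 < dP p v < dP p q)) /\
  (* strict monotonicity between adjacent midpoint and vertex crossings *)
  (forall a b, inP a -> inP b ->
     ((mcross n l a /\ vcross n l b) \/ (vcross n l a /\ mcross n l b)) ->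
     (forall x, inP x -> 0 < dP a x < dP a b -> ~ crossing n l x) ->
     (forall x y, inP x -> inP y -> dP a x < dP a y -> dP a y <= dP a b ->
        s n l x < s n l y) \/
     (forall x y, inP x -> inP y -> dP a x < dP a y -> dP a y <= dP a b ->
        s n l y < s n l x)).
Proof.
  intros Hl Hn [m Hmn].
  assert (Hm : (2 <= m)%nat) by nia.
  assert (Hnm : n = ((2 * l + 1) * m)%nat) by lia.
  split; [|split; [|split; [split; [|split]|]]].
  - apply (mcross_is_min l m n); assumption.
  - apply (vcross_is_max l m n); assumption.
  - apply (not_vcross_and_mcross l m n); assumption.
  - apply (vcross_gap l m n); assumption.
  - apply (mcross_gap l m n); assumption.
  - apply (s_strictly_monotone_between l m n); assumption.
Qed.
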